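(* Let $\mathcal{H}_A,\mathcal{H}_B$ be finite-dimensional Hilbert spaces, let $|\Psi\rangle,|\Phi\rangle\in\mathcal{H}_A\otimes\mathcal{H}_B$ be unit vectors (not necessarily orthogonal), and let $\alpha,\beta\in\mathbb{C}$ with $|\alpha|^2+|\beta|^2=1$ such that $|\Gamma\rangle=\alpha|\Psi\rangle+\beta|\Phi\rangle\neq0$. Then for every $t\in(0,1)$, $$\big\|\,|\Gamma\rangle\big\|^2\,E(\Gamma)\le f(t),\qquad f(t)=\frac{t|\beta|^2+(1-t)|\alpha|^2}{t(1-t)}\Big[tE(\Psi)+(1-t)E(\Phi)+h_2(t)\Big].$$
   Context: $S(\rho)=-\mathrm{Tr}(\rho\log\rho)$ is the von Neumann entropy (logarithm base 2). For a nonzero vector $|\chi\rangle\in\mathcal{H}_A\otimes\mathcal{H}_B$, its entanglement is $E(\chi)=S\big(\mathrm{Tr}_B|\chi\rangle\langle\chi|/\langle\chi|\chi\rangle\big)$, i.e. the entropy of entanglement of the normalized vector. $h_2(x)=-x\log x-(1-x)\log(1-x)$ is the binary entropy function. *)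

From Stdlib Require Import Reals ClassicalEpsilon.
Open Scope R_scope.

Record Cpx := mkC { Re : R; Im : R }.
Definition C0 : Cpx := mkC 0 0.
Definition RtoC (x : R) : Cpx := mkC x 0.
Definition Cadd (z w : Cpx) : Cpx := mkC (Re z + Re w) (Im z + Im w).
Definition Cmul (z w : Cpx) : Cpx :=
  mkC (Re z * Re w - Im z * Im w) (Re z * Im w + Im z * Re w).
Definition Cconj (z : Cpx) : Cpx := mkC (Re z) (- Im z).
Definition Cnorm2 (z : Cpx) : R := Re z * Re z + Im z * Im z.

Fixpoint sumR (n : nat) (f : nat -> R) : R :=
  match n with O => 0 | S k => sumR k f + f k end.
Fixpoint sumC (n : nat) (f : nat -> Cpx) : Cpx :=
  match n with O => C0 | S k => Cadd (sumC k f) (f k) end.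

(* ---------- vectors of H_A ⊗ H_B, H_A = Cpx^dA, H_B = Cpx^dB ----------
   A vector is given by its coefficients v i j in the product basis
   |i>⊗|j>, i < dA, j < dB (values at other indices are irrelevant). *)
Definition bivec := nat -> nat -> Cpx.

Definition norm2 (dA dB : nat) (v : bivec) : R :=
  sumR dA (fun i => sumR dB (fun j => Cnorm2 (v i j))).

Definition ptraceB (dA dB : nat) (v : bivec) : nat -> nat -> Cpx :=
  fun i k => sumC dB (fun j => Cmul (v i j) (Cconj (v k j))).

Definition log2 (x : R) : R := ln x / ln 2.
Definition xlog2x (x : R) : R := if Rle_dec x 0 then 0 else x * log2 x.

Definition unitary (n : nat) (U : nat -> nat -> Cpx) : Prop :=
  forall i j, (i < n)%nat -> (j < n)%nat ->
    sumC n (fun k => Cmul (Cconj (U k i)) (U k j)) =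
    (if Nat.eqb i j then RtoC 1 else C0).

Definition is_spectrum (n : nat) (rho : nat -> nat -> Cpx) (lam : nat -> R) : Prop :=
  exists U, unitary n U /\
    forall i k, (i < n)%nat -> (k < n)%nat ->
      rho i k = sumC n (fun l => Cmul (Cmul (U i l) (RtoC (lam l))) (Cconj (U k l))).

(* a chosen spectrum of rho (well defined as a multiset for Hermitian rho) *)
Definition spectrum (n : nat) (rho : nat -> nat -> Cpx) : nat -> R :=
  epsilon (inhabits (fun _ : nat => 0)) (fun lam => is_spectrum n rho lam).

Definition vN_entropy (n : nat) (rho : nat -> nat -> Cpx) : R :=
  - sumR n (fun l => xlog2x (spectrum n rho l)).

Definition entanglement (dA dB : nat) (v : bivec) : R :=
  vN_entropy dA (fun i k =>
    Cmul (ptraceB dA dB v i k) (RtoC (/ norm2 dA dB v))).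

Definition h2 (x : R) : R := - xlog2x x - xlog2x (1 - x).

Definition superpos (a b : Cpx) (Psi Phi : bivec) : bivec :=
  fun i j => Cadd (Cmul a (Psi i j)) (Cmul b (Phi i j)).

From Stdlib Require Import Reals Lra Lia Psatz FunctionalExtensionality ClassicalEpsilon Ring Field.
Open Scope R_scope.

(* Write ρ_B(v) = Σ_i v̄_i v̄_i^† for the unnormalized Gram matrix on H_B of the
   conjugated rows v̄_i of v, and φ(x) = x ln x, so that E(v) = -Σ_l φ(p_l)/ln 2
   where p is the spectrum of the reduced state ρ_A(v).  Four steps:
   (1) Operator inequality: ρ_B(Γ) <= λ (t ρ_B(Ψ) + (1-t) ρ_B(Φ)), from the
       scalar Cauchy–Schwarz bound |αa + βb|² <= λ (t|a|² + (1-t)|b|²)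
       applied row by row.
   (2) Schmidt decomposition: ρ_B(v) is the Gram matrix of an orthogonal family
       w_l with ‖w_l‖² = ‖v‖² p_l.
   (3) Hence t ρ_B(Ψ) + (1-t) ρ_B(Φ) is the Gram matrix of an ensemble of 2 dA
       vectors with weights t p_k, (1-t) q_k, whose φ-sum is, by the chain
       rule, -ln 2 (h₂(t) + t E(Ψ) + (1-t) E(Φ)).
   (4) Entropy comparison: if Y = Σ_k f_k f_k^† has trace 1 and dominates
       λ⁻¹ Σ_a w_a w_a^† for an orthogonal family w of total weight g, then
       Σ_k φ(‖f_k‖²) <= (g/λ) Σ_a φ(‖w_a‖²/g).  One diagonalizes Y; its
       eigenvalues y_l and the diagonal entries c_l of Σ_a w_a w_a^† in the
       eigenbasis are compared with the two families by majorization (Jensen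
       and Bessel), and c_l <= λ y_l is exploited by a concavity splitting of φ. *)

Lemma Cext z w : Re z = Re w -> Im z = Im w -> z = w.
Proof. destruct z, w; simpl; intros; subst; reflexivity. Qed.

Definition Copp z := mkC (- Re z) (- Im z).
Definition Csub z w := Cadd z (Copp w).
Definition Cone := mkC 1 0.

Lemma Cring_th : ring_theory C0 Cone Cadd Cmul Csub Copp (@eq Cpx).
Proof. constructor; intros; apply Cext; simpl; ring. Qed.
Add Ring Cring : Cring_th.

Ltac Csimpl := apply Cext; simpl.

Lemma RtoC_add a b : RtoC (a + b) = Cadd (RtoC a) (RtoC b).
Proof. Csimpl; ring. Qed.
Lemma RtoC_mul a b : RtoC (a * b) = Cmul (RtoC a) (RtoC b).
Proof. Csimpl; ring. Qed.
Lemma RtoC_inj a b : RtoC a = RtoC b -> a = b.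
Proof. intros H. apply (f_equal Re) in H. exact H. Qed.

Lemma Cconj_add z w : Cconj (Cadd z w) = Cadd (Cconj z) (Cconj w).
Proof. Csimpl; ring. Qed.
Lemma Cconj_mul z w : Cconj (Cmul z w) = Cmul (Cconj z) (Cconj w).
Proof. Csimpl; ring. Qed.
Lemma Cconj_sub z w : Cconj (Csub z w) = Csub (Cconj z) (Cconj w).
Proof. Csimpl; ring. Qed.
Lemma Cconj_conj z : Cconj (Cconj z) = z.
Proof. Csimpl; ring. Qed.
Lemma Cconj_RtoC a : Cconj (RtoC a) = RtoC a.
Proof. Csimpl; ring. Qed.
Lemma Cconj_C0 : Cconj C0 = C0.
Proof. Csimpl; ring. Qed.

Lemma Cnorm2_nonneg z : 0 <= Cnorm2 z.
Proof. unfold Cnorm2; nra. Qed.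
Lemma Cnorm2_mul z w : Cnorm2 (Cmul z w) = Cnorm2 z * Cnorm2 w.
Proof. unfold Cnorm2; simpl; ring. Qed.
Lemma Cnorm2_conj z : Cnorm2 (Cconj z) = Cnorm2 z.
Proof. unfold Cnorm2; simpl; ring. Qed.
Lemma Cnorm2_RtoC a : Cnorm2 (RtoC a) = a * a.
Proof. unfold Cnorm2; simpl; ring. Qed.
Lemma Cnorm2_opp z : Cnorm2 (Copp z) = Cnorm2 z.
Proof. unfold Cnorm2; simpl; ring. Qed.
Lemma Cmul_conj_l z : Cmul (Cconj z) z = RtoC (Cnorm2 z).
Proof. Csimpl; unfold Cnorm2; ring. Qed.
Lemma Cmul_conj_r z : Cmul z (Cconj z) = RtoC (Cnorm2 z).
Proof. Csimpl; unfold Cnorm2; ring. Qed.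
Lemma Cnorm2_zero z : Cnorm2 z = 0 -> z = C0.
Proof. unfold Cnorm2; intros H; Csimpl; nra. Qed.
Lemma Cnorm2_pos z : z <> C0 -> 0 < Cnorm2 z.
Proof.
  intros H. destruct (Cnorm2_nonneg z) as [h|h]; auto.
  exfalso; apply H, Cnorm2_zero; auto.
Qed.
Lemma Re_sq_le z : Re z * Re z <= Cnorm2 z.
Proof. unfold Cnorm2; nra. Qed.
Lemma Cnorm2_add_le z w : Cnorm2 (Cadd z w) <= 2 * Cnorm2 z + 2 * Cnorm2 w.
Proof.
  unfold Cnorm2; simpl.
  pose proof (Rle_0_sqr (Re z - Re w)); pose proof (Rle_0_sqr (Im z - Im w)).
  unfold Rsqr in *; nra.
Qed.

Lemma Csub_eq0 x y : Csub x y = C0 -> x = y.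
Proof. intros H. transitivity (Cadd (Csub x y) y); [ring|]. rewrite H; ring. Qed.

Lemma sumC_ext n f g : (forall i, (i < n)%nat -> f i = g i) -> sumC n f = sumC n g.
Proof. induction n; simpl; intros H; auto. rewrite IHn, H; auto; intros; apply H; lia. Qed.
Lemma sumR_ext n f g : (forall i, (i < n)%nat -> f i = g i) -> sumR n f = sumR n g.
Proof. induction n; simpl; intros H; auto. rewrite IHn, H; auto; intros; apply H; lia. Qed.

Lemma sumC_add n f g : sumC n (fun i => Cadd (f i) (g i)) = Cadd (sumC n f) (sumC n g).
Proof. induction n; simpl. Csimpl; ring. rewrite IHn; ring. Qed.
Lemma sumR_add n f g : sumR n (fun i => f i + g i) = sumR n f + sumR n g.
Proof. induction n; simpl. ring. rewrite IHn; ring. Qed.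
Lemma sumC_sub n f g : sumC n (fun i => Csub (f i) (g i)) = Csub (sumC n f) (sumC n g).
Proof. induction n; simpl. Csimpl; ring. rewrite IHn; ring. Qed.
Lemma sumR_minus n f g : sumR n (fun i => f i - g i) = sumR n f - sumR n g.
Proof. induction n; simpl. ring. rewrite IHn; ring. Qed.
Lemma sumC_scal_l n c f : sumC n (fun i => Cmul c (f i)) = Cmul c (sumC n f).
Proof. induction n; simpl. Csimpl; ring. rewrite IHn; ring. Qed.
Lemma sumC_scal_r n c f : sumC n (fun i => Cmul (f i) c) = Cmul (sumC n f) c.
Proof. induction n; simpl. Csimpl; ring. rewrite IHn; ring. Qed.
Lemma sumR_scal_l n c f : sumR n (fun i => c * f i) = c * sumR n f.
Proof. induction n; simpl. ring. rewrite IHn; ring. Qed.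
Lemma sumR_scal_r n c f : sumR n (fun i => f i * c) = sumR n f * c.
Proof. induction n; simpl. ring. rewrite IHn; ring. Qed.

Lemma sumC_zero n f : (forall i, (i < n)%nat -> f i = C0) -> sumC n f = C0.
Proof. induction n; simpl; intros H; auto. rewrite IHn, H by (auto; intros; apply H; lia). Csimpl; ring. Qed.
Lemma sumR_zero n f : (forall i, (i < n)%nat -> f i = 0) -> sumR n f = 0.
Proof. induction n; simpl; intros H; auto. rewrite IHn, H by (auto; intros; apply H; lia). ring. Qed.

Lemma sumC_swap n m f :
  sumC n (fun i => sumC m (fun j => f i j)) = sumC m (fun j => sumC n (fun i => f i j)).
Proof.
  induction n; simpl. symmetry; apply sumC_zero; auto.
  rewrite IHn, <- sumC_add; auto.
Qed.
Lemma sumR_swap n m f :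
  sumR n (fun i => sumR m (fun j => f i j)) = sumR m (fun j => sumR n (fun i => f i j)).
Proof.
  induction n; simpl. symmetry; apply sumR_zero; auto.
  rewrite IHn, <- sumR_add; auto.
Qed.

Lemma sumC_mul n m f g :
  Cmul (sumC n f) (sumC m g) = sumC n (fun i => sumC m (fun j => Cmul (f i) (g j))).
Proof. rewrite <- sumC_scal_r. apply sumC_ext; intros. rewrite <- sumC_scal_l; auto. Qed.

Lemma sumC_first n f : sumC (S n) f = Cadd (f 0%nat) (sumC n (fun i => f (S i))).
Proof.
  induction n. simpl; Csimpl; ring.
  change (sumC (S (S n)) f) with (Cadd (sumC (S n) f) (f (S n))). rewrite IHn. simpl; ring.
Qed.
Lemma sumR_first n f : sumR (S n) f = f 0%nat + sumR n (fun i => f (S i)).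
Proof.
  induction n. simpl; ring.
  change (sumR (S (S n)) f) with (sumR (S n) f + f (S n)). rewrite IHn. simpl; ring.
Qed.
Lemma sumR_plus a b f : sumR (a + b) f = sumR a f + sumR b (fun i => f (a + i)%nat).
Proof.
  induction b. simpl. rewrite Nat.add_0_r; ring.
  rewrite Nat.add_succ_r; simpl; rewrite IHb; ring.
Qed.

Lemma sumC_delta n j f : (j < n)%nat ->
  sumC n (fun i => if Nat.eqb i j then f i else C0) = f j.
Proof.
  induction n; intros H; [lia|]. simpl.
  destruct (Nat.eq_dec j n).
  - subst. rewrite Nat.eqb_refl, sumC_zero. Csimpl; ring.
    intros i Hi. destruct (Nat.eqb_spec i n); [lia|auto].
  - rewrite IHn by lia. destruct (Nat.eqb_spec n j); [lia|]. Csimpl; ring.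
Qed.

Lemma Re_sumC n f : Re (sumC n f) = sumR n (fun i => Re (f i)).
Proof. induction n; simpl; auto. rewrite IHn; auto. Qed.
Lemma sumC_conj n f : Cconj (sumC n f) = sumC n (fun i => Cconj (f i)).
Proof. induction n; simpl. Csimpl; ring. rewrite <- IHn, Cconj_add; auto. Qed.
Lemma sumC_RtoC n f : sumC n (fun i => RtoC (f i)) = RtoC (sumR n f).
Proof. induction n; simpl; auto. rewrite IHn, RtoC_add; auto. Qed.

Lemma sumR_le n f g : (forall i, (i < n)%nat -> f i <= g i) -> sumR n f <= sumR n g.
Proof.
  induction n; simpl; intros H. lra.
  pose proof (H n ltac:(lia)).
  assert (sumR n f <= sumR n g) by (apply IHn; intros; apply H; lia). lra.
Qed.
Lemma sumR_nonneg n f : (forall i, (i < n)%nat -> 0 <= f i) -> 0 <= sumR n f.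
Proof. intros H. rewrite <- (sumR_zero n (fun _ => 0)) by auto. apply sumR_le; auto. Qed.
Lemma sumR_term_le n f j :
  (forall i, (i < n)%nat -> 0 <= f i) -> (j < n)%nat -> f j <= sumR n f.
Proof.
  induction n; intros H Hj; [lia|]. simpl.
  assert (0 <= sumR n f) by (apply sumR_nonneg; intros; apply H; lia).
  destruct (Nat.eq_dec j n). subst; lra.
  assert (f j <= sumR n f) by (apply IHn; [intros; apply H; lia| lia]).
  pose proof (H n ltac:(lia)); lra.
Qed.
Lemma sumR_zero_inv n f j :
  (forall i, (i < n)%nat -> 0 <= f i) -> sumR n f = 0 -> (j < n)%nat -> f j = 0.
Proof. intros H Hs Hj. pose proof (sumR_term_le n f j H Hj). pose proof (H j Hj). lra. Qed.

(* A crude bound, enough to show that linear functionals are bounded. *)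
Lemma Cnorm2_sum_le n f : Cnorm2 (sumC n f) <= 2 ^ n * sumR n (fun i => Cnorm2 (f i)).
Proof.
  induction n; simpl. unfold Cnorm2; simpl; lra.
  pose proof (Cnorm2_add_le (sumC n f) (f n)).
  assert (1 <= 2 ^ n) by (apply pow_R1_Rle; lra).
  pose proof (Cnorm2_nonneg (f n)).
  assert (0 <= sumR n (fun i => Cnorm2 (f i))) by (apply sumR_nonneg; intros; apply Cnorm2_nonneg).
  nra.
Qed.

(** * The Hilbert space Cpx^n *)

(* Vectors of Cpx^n are functions nat -> Cpx read on {0, ..., n-1};
   [ip] is antilinear in its first argument and [vnorm2] is the squared norm. *)
Definition ip n (u v : nat -> Cpx) := sumC n (fun i => Cmul (Cconj (u i)) (v i)).
Definition vnorm2 n (v : nat -> Cpx) := sumR n (fun i => Cnorm2 (v i)).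
Definition col (U : nat -> nat -> Cpx) l := fun i => U i l.

Definition kron (i k : nat) := if Nat.eqb i k then Cone else C0.
Definition ek (k : nat) := fun i => kron i k.
Definition unitary_rows n (U : nat -> nat -> Cpx) := forall i j, (i < n)%nat -> (j < n)%nat ->
  sumC n (fun k => Cmul (U i k) (Cconj (U j k))) = kron i j.

Lemma sum_kron_l n i f : (i < n)%nat -> sumC n (fun k => Cmul (kron i k) (f k)) = f i.
Proof.
  intros H. rewrite <- (sumC_delta n i f H). apply sumC_ext; intros k Hk. unfold kron.
  rewrite Nat.eqb_sym. destruct (Nat.eqb k i); ring.
Qed.
Lemma sum_kron_r n j f : (j < n)%nat -> sumC n (fun k => Cmul (f k) (kron k j)) = f j.
Proof.
  intros H. rewrite <- (sumC_delta n j f H). apply sumC_ext; intros k Hk. unfold kron.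
  destruct (Nat.eqb k j); ring.
Qed.
Lemma kron_conj i k : Cconj (kron i k) = kron k i.
Proof. unfold kron. rewrite Nat.eqb_sym. destruct (Nat.eqb k i); Csimpl; ring. Qed.

Lemma vnorm2_nonneg n v : 0 <= vnorm2 n v.
Proof. apply sumR_nonneg; intros; apply Cnorm2_nonneg. Qed.
Lemma ip_self n v : ip n v v = RtoC (vnorm2 n v).
Proof. unfold ip, vnorm2. rewrite <- sumC_RtoC. apply sumC_ext; intros; apply Cmul_conj_l. Qed.
Lemma vnorm2_Re n v : vnorm2 n v = Re (ip n v v).
Proof. rewrite ip_self; reflexivity. Qed.
Lemma ip_conj n u v : Cconj (ip n u v) = ip n v u.
Proof.
  unfold ip. rewrite sumC_conj. apply sumC_ext; intros.
  rewrite Cconj_mul, Cconj_conj; ring.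
Qed.
Lemma ip_scal_r n u c v : ip n u (fun i => Cmul c (v i)) = Cmul c (ip n u v).
Proof. unfold ip. rewrite <- sumC_scal_l. apply sumC_ext; intros; ring. Qed.
Lemma ip_scal_l n u c v : ip n (fun i => Cmul c (u i)) v = Cmul (Cconj c) (ip n u v).
Proof. unfold ip. rewrite <- sumC_scal_l. apply sumC_ext; intros; rewrite Cconj_mul; ring. Qed.
Lemma ip_add_r n u v w : ip n u (fun i => Cadd (v i) (w i)) = Cadd (ip n u v) (ip n u w).
Proof. unfold ip. rewrite <- sumC_add. apply sumC_ext; intros; ring. Qed.
Lemma ip_sub_r n u v w : ip n u (fun i => Csub (v i) (w i)) = Csub (ip n u v) (ip n u w).
Proof. unfold ip. rewrite <- sumC_sub. apply sumC_ext; intros; ring. Qed.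
Lemma ip_sub_l n u v w : ip n (fun i => Csub (u i) (v i)) w = Csub (ip n u w) (ip n v w).
Proof. unfold ip. rewrite <- sumC_sub. apply sumC_ext; intros; rewrite Cconj_sub; ring. Qed.
Lemma ip_ext n u u' v v' :
  (forall i, (i < n)%nat -> u i = u' i) -> (forall i, (i < n)%nat -> v i = v' i) ->
  ip n u v = ip n u' v'.
Proof. intros H1 H2; unfold ip; apply sumC_ext; intros; rewrite H1, H2; auto. Qed.
Lemma vnorm2_ext n u u' : (forall i, (i < n)%nat -> u i = u' i) -> vnorm2 n u = vnorm2 n u'.
Proof. intros H1; unfold vnorm2; apply sumR_ext; intros; rewrite H1; auto. Qed.
Lemma vnorm2_scal n c v : vnorm2 n (fun i => Cmul c (v i)) = Cnorm2 c * vnorm2 n v.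
Proof. unfold vnorm2. rewrite <- sumR_scal_l. apply sumR_ext; intros; apply Cnorm2_mul. Qed.
Lemma vnorm2_zero_inv n v : vnorm2 n v = 0 -> forall i, (i < n)%nat -> v i = C0.
Proof.
  intros H i Hi. apply Cnorm2_zero. apply (sumR_zero_inv n (fun i => Cnorm2 (v i))); auto.
  intros; apply Cnorm2_nonneg.
Qed.
Lemma ip_zero_r n u v : (forall i, (i < n)%nat -> v i = C0) -> ip n u v = C0.
Proof. intros H; unfold ip; apply sumC_zero; intros; rewrite H by auto; Csimpl; ring. Qed.
Lemma ip_conjvec n x y : ip n (fun j => Cconj (x j)) (fun j => Cconj (y j)) = ip n y x.
Proof. unfold ip. apply sumC_ext; intros. rewrite Cconj_conj; ring. Qed.
Lemma vnorm2_conjvec n x : vnorm2 n (fun j => Cconj (x j)) = vnorm2 n x.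
Proof. unfold vnorm2. apply sumR_ext; intros; apply Cnorm2_conj. Qed.
Lemma ip_sumvec n L u (c : nat -> Cpx) (w : nat -> nat -> Cpx) :
  ip n u (fun i => sumC L (fun l => Cmul (c l) (w l i)))
  = sumC L (fun l => Cmul (c l) (ip n u (w l))).
Proof.
  unfold ip.
  rewrite (sumC_ext n _ (fun i => sumC L (fun l => Cmul (c l) (Cmul (Cconj (u i)) (w l i))))).
  - rewrite sumC_swap. apply sumC_ext; intros; rewrite <- sumC_scal_l; auto.
  - intros; rewrite <- sumC_scal_l; apply sumC_ext; intros; ring.
Qed.

Lemma ip_ek n k x : (k < n)%nat -> ip n (ek k) x = x k.
Proof.
  intros H. unfold ip, ek. rewrite <- (sum_kron_l n k x H). apply sumC_ext; intros.
  rewrite kron_conj. unfold kron. destruct (Nat.eqb k i); Csimpl; ring.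
Qed.
Lemma vnorm2_ek n k : (k < n)%nat -> vnorm2 n (ek k) = 1.
Proof.
  intros H. rewrite vnorm2_Re, ip_ek by auto. unfold ek, kron. rewrite Nat.eqb_refl. reflexivity.
Qed.
Lemma vnorm2_col_unit n E b : unitary n E -> (b < n)%nat -> vnorm2 n (col E b) = 1.
Proof. intros H Hb. rewrite vnorm2_Re. unfold ip, col. rewrite (H b b Hb Hb), Nat.eqb_refl. reflexivity. Qed.

Definition proj_weight n (v x : nat -> Cpx) :=
  if Rle_dec (vnorm2 n v) 0 then 0 else Cnorm2 (ip n v x) / vnorm2 n v.

Lemma proj_weight_nonneg n v x : 0 <= proj_weight n v x.
Proof.
  unfold proj_weight. destruct Rle_dec. lra.
  apply Rmult_le_pos. apply Cnorm2_nonneg. left; apply Rinv_0_lt_compat; lra.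
Qed.

Lemma bessel n A (v : nat -> nat -> Cpx) :
  (forall a b, (a < A)%nat -> (b < A)%nat -> a <> b -> ip n (v a) (v b) = C0) ->
  forall x, sumR A (fun a => proj_weight n (v a) x) <= vnorm2 n x.
Proof.
  induction A; intros Horth x. simpl; apply vnorm2_nonneg.
  simpl.
  assert (IH : forall y, sumR A (fun a => proj_weight n (v a) y) <= vnorm2 n y)
    by (apply IHA; intros; apply Horth; lia).
  unfold proj_weight at 2. destruct (Rle_dec (vnorm2 n (v A)) 0) as [Hle|Hgt].
  - specialize (IH x); lra.
  - (* remove from x its component along v A, which the other v a do not see *)
    set (N := vnorm2 n (v A)). set (z := ip n (v A) x).
    set (c := Cmul z (RtoC (/ N))).
    set (x' := fun i => Csub (x i) (Cmul c (v A i))).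
    assert (E1 : sumR A (fun a => proj_weight n (v a) x') = sumR A (fun a => proj_weight n (v a) x)).
    { apply sumR_ext; intros a Ha. unfold proj_weight. destruct Rle_dec; auto.
      unfold x'. rewrite ip_sub_r, ip_scal_r, Horth by lia.
      replace (Csub (ip n (v a) x) (Cmul c C0)) with (ip n (v a) x) by ring. auto. }
    assert (E2 : vnorm2 n x' = vnorm2 n x - Cnorm2 z / N).
    { assert (N <> 0) by (unfold N in *; lra).
      rewrite !vnorm2_Re. unfold x'. rewrite ip_sub_l, !ip_sub_r, !ip_scal_l, !ip_scal_r.
      rewrite !ip_self. fold N. rewrite <- (ip_conj n (v A) x). fold z.
      unfold c. simpl. unfold Cnorm2. field; auto. }
    specialize (IH x'). rewrite E1, E2 in IH. lra.
Qed.

Lemma parseval n U x : unitary_rows n U ->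
  sumR n (fun l => Cnorm2 (ip n (col U l) x)) = vnorm2 n x.
Proof.
  intros HU. apply RtoC_inj. rewrite <- sumC_RtoC.
  rewrite (sumC_ext n _ (fun l => Cmul (ip n x (col U l)) (ip n (col U l) x))).
  2:{ intros l Hl. rewrite <- Cmul_conj_l, ip_conj; auto. }
  unfold ip.
  rewrite (sumC_ext n _ (fun l => sumC n (fun j => sumC n (fun j' =>
     Cmul (Cmul (Cconj (x j)) (x j')) (Cmul (col U l j) (Cconj (col U l j'))))))).
  2:{ intros l Hl. rewrite sumC_mul. apply sumC_ext; intros; apply sumC_ext; intros.
      unfold col; ring. }
  rewrite sumC_swap.
  rewrite (sumC_ext n _ (fun j => Cmul (Cconj (x j)) (x j))); [apply ip_self|].
  intros j Hj. rewrite sumC_swap.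
  rewrite (sumC_ext n _ (fun j' => Cmul (kron j j') (Cmul (Cconj (x j)) (x j')))).
  - apply (sum_kron_l n j (fun j' => Cmul (Cconj (x j)) (x j'))); auto.
  - intros j' Hj'. rewrite sumC_scal_l. unfold col. rewrite HU by auto. ring.
Qed.

Lemma parseval_std n x : sumR n (fun k => Cnorm2 (ip n (ek k) x)) = vnorm2 n x.
Proof. unfold vnorm2. apply sumR_ext; intros; rewrite ip_ek; auto. Qed.

Lemma bessel_residual n L (w : nat -> nat -> Cpx) x :
  (forall a b, (a < L)%nat -> (b < L)%nat -> ip n (w a) (w b) = kron a b) ->
  vnorm2 n (fun i => Csub (x i) (sumC L (fun l => Cmul (ip n (w l) x) (w l i))))
  = vnorm2 n x - sumR L (fun l => Cnorm2 (ip n (w l) x)).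
Proof.
  induction L; intros Hw.
  - simpl. rewrite Rminus_0_r. apply vnorm2_ext; intros; Csimpl; ring.
  - simpl. set (r := fun i => Csub (x i) (sumC L (fun l => Cmul (ip n (w l) x) (w l i)))).
    set (c := ip n (w L) x).
    rewrite (vnorm2_ext n _ (fun i => Csub (r i) (Cmul c (w L i)))) by (intros; unfold r; ring).
    assert (Hc : ip n (w L) r = c).
    { unfold r. rewrite ip_sub_r, ip_sumvec, sumC_zero. fold c. ring.
      intros l Hl. rewrite Hw by lia. unfold kron. destruct (Nat.eqb_spec L l); [lia|]. Csimpl; ring. }
    assert (Hww : ip n (w L) (w L) = Cone).
    { rewrite Hw by lia; unfold kron; rewrite Nat.eqb_refl; auto. }
    rewrite vnorm2_Re, ip_sub_l, !ip_sub_r, !ip_scal_l, !ip_scal_r, <- (ip_conj n (w L) r).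
    rewrite Hc, Hww, ip_self. unfold r. rewrite IHL by (intros; apply Hw; lia).
    unfold Cnorm2; simpl. ring.
Qed.

(** * Matrices, sesquilinear forms and spectral decompositions *)

Definition sesq n (M : nat -> nat -> Cpx) (e f : nat -> Cpx) :=
  sumC n (fun j => sumC n (fun j' => Cmul (Cconj (e j)) (Cmul (M j j') (f j')))).
Definition mxv n (M : nat -> nat -> Cpx) (v : nat -> Cpx) :=
  fun i => sumC n (fun k => Cmul (M i k) (v k)).
Definition hermitian n (M : nat -> nat -> Cpx) :=
  forall i k, (i < n)%nat -> (k < n)%nat -> M k i = Cconj (M i k).
Definition spec_decomp n (M U : nat -> nat -> Cpx) (lam : nat -> R) :=
  forall i k, (i < n)%nat -> (k < n)%nat ->
    M i k = sumC n (fun l => Cmul (Cmul (U i l) (RtoC (lam l))) (Cconj (U k l))).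
Definition gram K (h : nat -> nat -> Cpx) :=
  fun j j' => sumC K (fun k => Cmul (h k j) (Cconj (h k j'))).
Definition gram_weight n K (h : nat -> nat -> Cpx) (e : nat -> Cpx) :=
  sumR K (fun k => Cnorm2 (ip n e (h k))).

Lemma sesq_ip_mxv n M e f : sesq n M e f = ip n e (mxv n M f).
Proof. unfold sesq, ip, mxv. apply sumC_ext; intros. rewrite <- sumC_scal_l; auto. Qed.

Lemma sesq_ext n M e e' f f' :
  (forall i, (i < n)%nat -> e i = e' i) -> (forall i, (i < n)%nat -> f i = f' i) ->
  sesq n M e f = sesq n M e' f'.
Proof. intros H1 H2; unfold sesq; apply sumC_ext; intros; apply sumC_ext; intros; rewrite H1, H2; auto. Qed.

Lemma sesq_mx_ext n M M' e f :
  (forall j j', (j < n)%nat -> (j' < n)%nat -> M j j' = M' j j') -> sesq n M e f = sesq n M' e f.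
Proof. intros H; unfold sesq; apply sumC_ext; intros; apply sumC_ext; intros; rewrite H; auto. Qed.

Lemma sesq_hermitian n M e f : hermitian n M -> Cconj (sesq n M e f) = sesq n M f e.
Proof.
  intros H. unfold sesq. rewrite sumC_conj, sumC_swap. apply sumC_ext; intros.
  rewrite sumC_conj. apply sumC_ext; intros. rewrite (H i i0) by auto.
  rewrite !Cconj_mul, Cconj_conj. ring.
Qed.

Lemma sesq_vnorm2_zero n M v : vnorm2 n v = 0 -> sesq n M v v = C0.
Proof.
  intros H. rewrite (sesq_ext n M v (fun _ => C0) v (fun _ => C0)) by (apply vnorm2_zero_inv; auto).
  unfold sesq. apply sumC_zero; intros; apply sumC_zero; intros. Csimpl; ring.
Qed.

Lemma sesq_sub n A B e f :
  sesq n (fun i k => Csub (A i k) (B i k)) e f = Csub (sesq n A e f) (sesq n B e f).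
Proof.
  unfold sesq. rewrite <- sumC_sub. apply sumC_ext; intros. rewrite <- sumC_sub.
  apply sumC_ext; intros; ring.
Qed.

Lemma sesq_scalar_mx n c e f :
  sesq n (fun i k => if Nat.eqb i k then c else C0) e f = Cmul c (ip n e f).
Proof.
  unfold sesq, ip. rewrite <- sumC_scal_l. apply sumC_ext; intros i Hi.
  rewrite <- (sumC_delta n i (fun k => Cmul c (Cmul (Cconj (e i)) (f k)))) by auto.
  apply sumC_ext; intros k Hk. rewrite Nat.eqb_sym. destruct (Nat.eqb k i); ring.
Qed.

Lemma sesq_ek n M k : (k < n)%nat -> sesq n M (ek k) (ek k) = M k k.
Proof.
  intros H. rewrite sesq_ip_mxv, ip_ek by auto. unfold mxv, ek.
  apply (sum_kron_r n k (fun j => M k j)); auto.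
Qed.

Lemma hermitian_real n M i : hermitian n M -> (i < n)%nat -> M i i = RtoC (Re (M i i)).
Proof.
  intros H Hi. pose proof (H i i Hi Hi) as E. apply (f_equal Im) in E. simpl in E.
  Csimpl; lra.
Qed.

Lemma hermitian_gram K h n : hermitian n (gram K h).
Proof.
  intros j j' Hj Hj'. unfold gram. rewrite sumC_conj. apply sumC_ext; intros.
  rewrite Cconj_mul, Cconj_conj; ring.
Qed.

Lemma sesq_outer_sum n K M (h g : nat -> nat -> Cpx) c e f :
  (forall j j', (j < n)%nat -> (j' < n)%nat ->
     M j j' = sumC K (fun k => Cmul (Cmul (h k j) (c k)) (Cconj (g k j')))) ->
  sesq n M e f = sumC K (fun k => Cmul (Cmul (ip n e (h k)) (c k)) (ip n (g k) f)).
Proof.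
  intros HM. unfold sesq.
  rewrite (sumC_ext n _ (fun j => sumC K (fun k => sumC n (fun j' =>
     Cmul (Cmul (Cmul (Cconj (e j)) (h k j)) (c k)) (Cmul (Cconj (g k j')) (f j')))))).
  2:{ intros j Hj. rewrite <- sumC_swap. apply sumC_ext; intros j' Hj'.
      rewrite HM by auto. rewrite <- sumC_scal_r, <- sumC_scal_l. apply sumC_ext; intros; ring. }
  rewrite sumC_swap. apply sumC_ext; intros k Hk.
  unfold ip. rewrite <- sumC_scal_r, sumC_mul. apply sumC_ext; intros; apply sumC_ext; intros; ring.
Qed.

Lemma sesq_gram n K h e f :
  sesq n (gram K h) e f = sumC K (fun k => Cmul (ip n e (h k)) (ip n (h k) f)).
Proof.
  rewrite (sesq_outer_sum n K (gram K h) h h (fun _ => Cone)).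
  - apply sumC_ext; intros; ring.
  - intros; unfold gram; apply sumC_ext; intros; ring.
Qed.

Lemma sesq_gram_diag n K h e : sesq n (gram K h) e e = RtoC (gram_weight n K h e).
Proof.
  rewrite sesq_gram. unfold gram_weight. rewrite <- sumC_RtoC.
  apply sumC_ext; intros. rewrite <- (ip_conj n e (h i)), Cmul_conj_r; auto.
Qed.

Lemma gram_weight_eq n K K' h h' e :
  (forall j j', (j < n)%nat -> (j' < n)%nat -> gram K h j j' = gram K' h' j j') ->
  gram_weight n K h e = gram_weight n K' h' e.
Proof.
  intros H. apply RtoC_inj. rewrite <- !sesq_gram_diag. apply sesq_mx_ext; auto.
Qed.

Lemma sesq_spec n M U lam a b :
  unitary n U -> spec_decomp n M U lam -> (a < n)%nat -> (b < n)%nat ->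
  sesq n M (col U a) (col U b) = if Nat.eqb a b then RtoC (lam a) else C0.
Proof.
  intros HU HM Ha Hb.
  rewrite (sesq_outer_sum n n M (fun l => col U l) (fun l => col U l) (fun l => RtoC (lam l))).
  2:{ intros; rewrite HM by auto; apply sumC_ext; intros; unfold col; ring. }
  rewrite (sumC_ext n _ (fun l => if Nat.eqb l a then (if Nat.eqb a b then RtoC (lam a) else C0) else C0)).
  - apply sumC_delta; auto.
  - intros l Hl. unfold ip. pose proof (HU a l Ha Hl) as E1. pose proof (HU l b Hl Hb) as E2.
    unfold col. rewrite E1, E2.
    destruct (Nat.eqb_spec a l), (Nat.eqb_spec l a), (Nat.eqb_spec l b), (Nat.eqb_spec a b);
      subst; try lia; Csimpl; ring.
Qed.

Lemma sesq_bounded n M v :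
  Re (sesq n M v v) <= sumR n (fun j => sumR n (fun j' => (Cnorm2 (M j j') + 1) / 2)) * vnorm2 n v.
Proof.
  unfold sesq. rewrite Re_sumC, <- sumR_scal_r. apply sumR_le; intros j Hj.
  rewrite Re_sumC, <- sumR_scal_r. apply sumR_le; intros j' Hj'.
  assert (Hcoord : forall i, (i < n)%nat -> Cnorm2 (v i) <= vnorm2 n v).
  { intros i Hi. apply (sumR_term_le n (fun i => Cnorm2 (v i))); auto. intros; apply Cnorm2_nonneg. }
  pose proof (Hcoord j Hj) as HA. pose proof (Hcoord j' Hj') as HB.
  pose proof (Re_sq_le (Cmul (Cconj (v j)) (Cmul (M j j') (v j')))) as HX.
  rewrite !Cnorm2_mul, Cnorm2_conj in HX.
  pose proof (Cnorm2_nonneg (v j)). pose proof (Cnorm2_nonneg (v j')). pose proof (Cnorm2_nonneg (M j j')).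
  set (X := Re (Cmul (Cconj (v j)) (Cmul (M j j') (v j')))) in *.
  set (A := Cnorm2 (v j)) in *. set (B := Cnorm2 (v j')) in *. set (Mm := Cnorm2 (M j j')) in *.
  clearbody X A B Mm.
  (* |X| <= sqrt(Mm A B) <= (Mm+1)(A+B)/4 by two AM-GM steps *)
  assert (HY : X <= (Mm + 1) * (A + B) / 4).
  { assert (0 <= (Mm + 1) * (A + B) / 4) by nra.
    assert (Mm * A * B * 16 <= ((Mm + 1) * (A + B)) * ((Mm + 1) * (A + B))).
    { assert (4 * Mm <= (Mm+1)*(Mm+1)) by (pose proof (Rle_0_sqr (Mm - 1)); unfold Rsqr in *; nra).
      assert (4 * (A * B) <= (A+B)*(A+B)) by (pose proof (Rle_0_sqr (A - B)); unfold Rsqr in *; nra).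
      assert (0 <= A * B) by nra. nra. }
    nra. }
  nra.
Qed.

(** * Positive semidefinite matrices: coercive or singular *)

Definition vcons (x : Cpx) (w : nat -> Cpx) := fun i => match i with O => x | S i' => w i' end.
Definition row0 n (N : nat -> nat -> Cpx) (w : nat -> Cpx) := sumC n (fun k => Cmul (N 0%nat (S k)) (w k)).
Definition minor0 (N : nat -> nat -> Cpx) := fun i k => N (S i) (S k).
Definition schur_compl (N : nat -> nat -> Cpx) (a : R) := fun i k =>
  Csub (N (S i) (S k)) (Cmul (Cmul (N (S i) 0%nat) (N 0%nat (S k))) (RtoC (/ a))).

Definition psd n N := forall v, 0 <= Re (sesq n N v v).
Definition coercive n N := exists c, 0 < c /\ forall v, c * vnorm2 n v <= Re (sesq n N v v).
Definition singular n N := exists v, 0 < vnorm2 n v /\ forall i, (i < n)%nat -> mxv n N v i = C0.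

Lemma vcons_eta (v : nat -> Cpx) : v = vcons (v 0%nat) (fun i => v (S i)).
Proof. apply functional_extensionality; intros [|i]; reflexivity. Qed.

Lemma vnorm2_vcons n x w : vnorm2 (S n) (vcons x w) = Cnorm2 x + vnorm2 n w.
Proof. unfold vnorm2. rewrite sumR_first. reflexivity. Qed.

Lemma mxv_vcons0 n N x w : mxv (S n) N (vcons x w) 0%nat = Cadd (Cmul (N 0%nat 0%nat) x) (row0 n N w).
Proof. unfold mxv. rewrite sumC_first. reflexivity. Qed.
Lemma mxv_vconsS n N x w i : mxv (S n) N (vcons x w) (S i) =
  Cadd (Cmul (N (S i) 0%nat) x) (sumC n (fun k => Cmul (N (S i) (S k)) (w k))).
Proof. unfold mxv. rewrite sumC_first. reflexivity. Qed.

Lemma row0_bound n N w :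
  Cnorm2 (row0 n N w) <= 2 ^ n * sumR n (fun k => Cnorm2 (N 0%nat (S k))) * vnorm2 n w.
Proof.
  unfold row0. eapply Rle_trans. apply Cnorm2_sum_le. rewrite Rmult_assoc.
  apply Rmult_le_compat_l. apply pow_le; lra.
  rewrite <- sumR_scal_r. apply sumR_le; intros. rewrite Cnorm2_mul.
  apply Rmult_le_compat_l. apply Cnorm2_nonneg.
  apply (sumR_term_le n (fun i => Cnorm2 (w i))); auto. intros; apply Cnorm2_nonneg.
Qed.

Lemma sesq_vcons n N x w : hermitian (S n) N ->
  sesq (S n) N (vcons x w) (vcons x w) =
  Cadd (Cadd (Cmul (Cconj x) (Cmul (N 0%nat 0%nat) x))
             (Cadd (Cmul (Cconj x) (row0 n N w)) (Cmul (Cconj (row0 n N w)) x)))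
       (sesq n (minor0 N) w w).
Proof.
  intros H. unfold sesq at 1. rewrite sumC_first. cbn [vcons].
  rewrite (sumC_first n (fun j' => Cmul (Cconj x) (Cmul (N 0%nat j') (vcons x w j')))). cbn [vcons].
  rewrite (sumC_ext n (fun i => sumC (S n) (fun j' => Cmul (Cconj (w i)) (Cmul (N (S i) j') (vcons x w j'))))
     (fun i => Cadd (Cmul (Cconj (w i)) (Cmul (N (S i) 0%nat) x))
                    (sumC n (fun j => Cmul (Cconj (w i)) (Cmul (N (S i) (S j)) (w j)))))).
  2:{ intros; rewrite sumC_first; auto. }
  rewrite sumC_add.
  assert (E1 : sumC n (fun i => Cmul (Cconj (w i)) (Cmul (N (S i) 0%nat) x)) = Cmul (Cconj (row0 n N w)) x).
  { unfold row0. rewrite sumC_conj, <- sumC_scal_r. apply sumC_ext; intros.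
    rewrite (H 0%nat (S i)) by lia. rewrite Cconj_mul; ring. }
  assert (E2 : sumC n (fun i => Cmul (Cconj x) (Cmul (N 0%nat (S i)) (w i))) = Cmul (Cconj x) (row0 n N w)).
  { unfold row0. rewrite <- sumC_scal_l. auto. }
  rewrite E1, E2. unfold sesq, minor0. ring.
Qed.

Lemma sesq_schur n N a w : hermitian (S n) N ->
  sesq n (schur_compl N a) w w = Csub (sesq n (minor0 N) w w)
     (Cmul (Cmul (Cconj (row0 n N w)) (row0 n N w)) (RtoC (/ a))).
Proof.
  intros H. unfold sesq, schur_compl, minor0.
  rewrite (sumC_ext n _ (fun i => Csub (sumC n (fun j => Cmul (Cconj (w i)) (Cmul (N (S i) (S j)) (w j))))
      (sumC n (fun j => Cmul (Cmul (Cmul (Cconj (w i)) (N (S i) 0%nat)) (RtoC (/a))) (Cmul (N 0%nat (S j)) (w j)))))).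
  2:{ intros; rewrite <- sumC_sub; apply sumC_ext; intros; ring. }
  rewrite sumC_sub. f_equal.
  rewrite (sumC_ext n _ (fun i => Cmul (Cmul (Cmul (Cconj (w i)) (N (S i) 0%nat)) (RtoC (/a))) (row0 n N w))).
  2:{ intros; unfold row0; rewrite sumC_scal_l; auto. }
  rewrite !sumC_scal_r.
  assert (E : sumC n (fun i => Cmul (Cconj (w i)) (N (S i) 0%nat)) = Cconj (row0 n N w)).
  { unfold row0. rewrite sumC_conj. apply sumC_ext; intros. rewrite (H 0%nat (S i)) by lia.
    rewrite Cconj_mul; ring. }
  rewrite E; ring.
Qed.

Lemma schur_identity n N x w : hermitian (S n) N -> 0 < Re (N 0%nat 0%nat) ->
  Re (sesq (S n) N (vcons x w) (vcons x w)) =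
  Re (N 0%nat 0%nat) * Cnorm2 (Cadd x (Cmul (row0 n N w) (RtoC (/ Re (N 0%nat 0%nat)))))
  + Re (sesq n (schur_compl N (Re (N 0%nat 0%nat))) w w).
Proof.
  intros H Ha. rewrite sesq_vcons, sesq_schur by auto.
  pose proof (hermitian_real (S n) N 0%nat H ltac:(lia)) as HN.
  set (a := Re (N 0%nat 0%nat)) in *. rewrite HN. clearbody a.
  unfold Cnorm2. simpl. field. lra.
Qed.

Lemma hermitian_schur n N : hermitian (S n) N -> hermitian n (schur_compl N (Re (N 0%nat 0%nat))).
Proof.
  intros H i k Hi Hk. unfold schur_compl. rewrite Cconj_sub, !Cconj_mul, Cconj_RtoC.
  rewrite (H (S i) (S k)), (H 0%nat (S k)), (H (S i) 0%nat) by lia. ring.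
Qed.

Lemma mxv_schur n N a w i :
  mxv n (schur_compl N a) w i = Csub (sumC n (fun k => Cmul (N (S i) (S k)) (w k)))
                                     (Cmul (Cmul (N (S i) 0%nat) (row0 n N w)) (RtoC (/ a))).
Proof.
  unfold mxv, schur_compl, row0. rewrite <- sumC_scal_l, <- sumC_scal_r, <- sumC_sub.
  apply sumC_ext; intros; ring.
Qed.

(* A zero pivot of a PSD matrix forces a zero first row: otherwise the test
   vector (-T b, e_k) with T large makes the form negative. *)
Lemma psd_null_pivot n N : hermitian (S n) N -> psd (S n) N -> Re (N 0%nat 0%nat) <= 0 ->
  forall k, (k < n)%nat -> N 0%nat (S k) = C0.
Proof.
  intros HN Hpsd Ha k Hk. apply Cnorm2_zero.
  destruct (Rle_lt_dec (Cnorm2 (N 0%nat (S k))) 0) as [h|h].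
  { pose proof (Cnorm2_nonneg (N 0%nat (S k))); lra. }
  exfalso. set (b := N 0%nat (S k)) in *.
  set (T := (Rabs (Re (N (S k) (S k))) + 1) / (2 * Cnorm2 b)).
  pose proof (Hpsd (vcons (Cmul (RtoC (- T)) b) (ek k))) as H.
  assert (Ha0 : 0 <= Re (N 0%nat 0%nat)).
  { pose proof (Hpsd (ek 0%nat)) as H0. rewrite sesq_ek in H0 by lia. exact H0. }
  assert (Eb : row0 n N (ek k) = b).
  { unfold row0, ek. apply (sum_kron_r n k (fun j => N 0%nat (S j))); auto. }
  rewrite sesq_vcons, Eb in H by auto. unfold minor0 in H. rewrite sesq_ek in H by auto.
  rewrite (hermitian_real (S n) N 0%nat HN ltac:(lia)) in H.
  replace (Re (N 0%nat 0%nat)) with 0 in H by lra.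
  assert (HT : T * (2 * Cnorm2 b) = Rabs (Re (N (S k) (S k))) + 1) by (unfold T; field; lra).
  pose proof (Rle_abs (Re (N (S k) (S k)))).
  simpl in H. unfold Cnorm2 in *. clearbody T b. nra.
Qed.

Lemma schur_psd n N : hermitian (S n) N -> psd (S n) N -> 0 < Re (N 0%nat 0%nat) ->
  psd n (schur_compl N (Re (N 0%nat 0%nat))).
Proof.
  intros HN Hpsd Ha w. set (a := Re (N 0%nat 0%nat)).
  pose proof (Hpsd (vcons (Copp (Cmul (row0 n N w) (RtoC (/ a)))) w)) as H.
  rewrite schur_identity in H by auto. fold a in H.
  replace (Cadd (Copp (Cmul (row0 n N w) (RtoC (/ a)))) (Cmul (row0 n N w) (RtoC (/ a)))) with C0 in H
    by ring.
  unfold Cnorm2 in H; simpl in H. lra.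
Qed.

(* A coercive Schur complement makes N coercive, with constant
   min(a/2, c/K) where K accounts for the size of the first row. *)
Lemma schur_coercive_lift n N : hermitian (S n) N -> 0 < Re (N 0%nat 0%nat) ->
  coercive n (schur_compl N (Re (N 0%nat 0%nat))) -> coercive (S n) N.
Proof.
  intros HN Ha [c [Hc Hcv]]. set (a := Re (N 0%nat 0%nat)) in *.
  set (Bb := sumR n (fun k => Cnorm2 (N 0%nat (S k)))).
  assert (HBb : 0 <= Bb) by (apply sumR_nonneg; intros; apply Cnorm2_nonneg).
  assert (H2n : 0 < 2 ^ n) by (apply pow_lt; lra).
  set (K := 1 + 2 * (2 ^ n * Bb) / (a * a)).
  assert (HK : 1 <= K).
  { unfold K. assert (0 <= 2 * (2 ^ n * Bb) / (a * a)).
    { apply Rmult_le_pos. nra. left; apply Rinv_0_lt_compat; nra. } lra. }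
  set (c' := Rmin (a / 2) (c / K)).
  assert (Hc' : 0 < c') by (apply Rmin_pos; [lra| apply Rdiv_lt_0_compat; lra]).
  exists c'. split; auto.
  intros v. rewrite (vcons_eta v). set (x := v 0%nat). set (w := fun i => v (S i)).
  rewrite schur_identity by auto. fold a. rewrite vnorm2_vcons.
  set (y := Cadd x (Cmul (row0 n N w) (RtoC (/ a)))).
  pose proof (Hcv w) as Hw.
  assert (Hx : Cnorm2 x <= 2 * Cnorm2 y + 2 * (Cnorm2 (row0 n N w) / (a * a))).
  { replace x with (Cadd y (Copp (Cmul (row0 n N w) (RtoC (/ a))))) by (unfold y; ring).
    eapply Rle_trans. apply Cnorm2_add_le. rewrite Cnorm2_opp, Cnorm2_mul, Cnorm2_RtoC.
    right. field. lra. }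
  pose proof (row0_bound n N w) as Hb. fold Bb in Hb.
  assert (Hb2 : Cnorm2 (row0 n N w) / (a * a) <= (2 ^ n * Bb) * vnorm2 n w / (a * a)).
  { apply Rmult_le_compat_r. left; apply Rinv_0_lt_compat; nra. lra. }
  assert (Hnv : Cnorm2 x + vnorm2 n w <= 2 * Cnorm2 y + K * vnorm2 n w).
  { unfold K. replace ((1 + 2 * (2 ^ n * Bb) / (a * a)) * vnorm2 n w) with
      (vnorm2 n w + 2 * ((2 ^ n * Bb) * vnorm2 n w / (a * a))) by (field; lra). lra. }
  pose proof (Rmin_l (a / 2) (c / K)). pose proof (Rmin_r (a / 2) (c / K)). fold c' in H, H0.
  assert (c' * K <= c).
  { assert (c' * K <= c / K * K) by (apply Rmult_le_compat_r; lra).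
    replace (c / K * K) with c in H1 by (field; lra). lra. }
  pose proof (vnorm2_nonneg n w). pose proof (Cnorm2_nonneg y).
  clearbody c' K Bb y. nra.
Qed.

(* A kernel vector w of the Schur complement lifts to (-row0(w)/a, w). *)
Lemma schur_kernel_lift n N : hermitian (S n) N -> 0 < Re (N 0%nat 0%nat) ->
  singular n (schur_compl N (Re (N 0%nat 0%nat))) -> singular (S n) N.
Proof.
  intros HN Ha [w [Hw Hwk]]. set (a := Re (N 0%nat 0%nat)) in *.
  exists (vcons (Copp (Cmul (row0 n N w) (RtoC (/ a)))) w). split.
  { rewrite vnorm2_vcons. pose proof (Cnorm2_nonneg (Copp (Cmul (row0 n N w) (RtoC (/ a))))). lra. }
  intros [|i] Hi.
  - rewrite mxv_vcons0, (hermitian_real (S n) N 0%nat HN ltac:(lia)). fold a. Csimpl; field; lra.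
  - rewrite mxv_vconsS. pose proof (Hwk i ltac:(lia)) as E. rewrite mxv_schur in E.
    rewrite (Csub_eq0 _ _ E). ring.
Qed.

(* A PSD Hermitian matrix is either coercive or has a nonzero kernel vector;
   by induction on the size, eliminating the first coordinate. *)
Lemma psd_coercive_or_singular n : forall N, hermitian n N -> psd n N -> coercive n N \/ singular n N.
Proof.
  induction n; intros N HN Hpsd.
  - left. exists 1. split; [lra|]. intros v. unfold vnorm2, sesq; simpl. lra.
  - destruct (Rle_lt_dec (Re (N 0%nat 0%nat)) 0) as [Ha|Ha].
    +
      right. exists (ek 0%nat). split; [rewrite vnorm2_ek by lia; lra|].
      assert (Ha0 : Re (N 0%nat 0%nat) = 0).
      { pose proof (Hpsd (ek 0%nat)) as H0. rewrite sesq_ek in H0 by lia. lra. }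
      intros i Hi. unfold mxv, ek. rewrite (sum_kron_r (S n) 0 (fun k => N i k)) by lia.
      destruct i as [|i].
      * rewrite (hermitian_real (S n) N 0%nat HN ltac:(lia)), Ha0. reflexivity.
      * rewrite (HN 0%nat (S i)), (psd_null_pivot n N HN Hpsd Ha i) by lia. apply Cconj_C0.
    + destruct (IHn _ (hermitian_schur n N HN) (schur_psd n N HN Hpsd Ha)) as [Hc|Hk].
      * left. apply schur_coercive_lift; auto.
      * right. apply schur_kernel_lift; auto.
Qed.

(** * Existence of an eigenvector *)

Lemma vnorm2_normalize n v : 0 < vnorm2 n v ->
  vnorm2 n (fun i => Cmul (RtoC (/ sqrt (vnorm2 n v))) (v i)) = 1.
Proof.
  intros Hv. rewrite vnorm2_scal, Cnorm2_RtoC.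
  assert (Hs : sqrt (vnorm2 n v) <> 0) by (apply Rgt_not_eq, sqrt_lt_R0; auto).
  replace (/ sqrt (vnorm2 n v) * / sqrt (vnorm2 n v)) with (/ (sqrt (vnorm2 n v) * sqrt (vnorm2 n v)))
    by (field; auto).
  rewrite sqrt_sqrt by lra. field; lra.
Qed.

(* The least constant mu with Re <v,Mv> <= mu ‖v‖² exists (supremum of the
   Rayleigh quotient, by completeness of R). *)
Lemma rayleigh_sup n M : (0 < n)%nat ->
  exists mu, (forall v, Re (sesq n M v v) <= mu * vnorm2 n v) /\
             (forall m, (forall v, Re (sesq n M v v) <= m * vnorm2 n v) -> mu <= m).
Proof.
  intros Hn.
  set (E := fun r => exists v, 0 < vnorm2 n v /\ r = Re (sesq n M v v) / vnorm2 n v).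
  assert (Hquot : forall v m, 0 < vnorm2 n v ->
            (Re (sesq n M v v) / vnorm2 n v <= m <-> Re (sesq n M v v) <= m * vnorm2 n v)).
  { intros v m Hv. split; intros H.
    - apply (Rmult_le_compat_r (vnorm2 n v)) in H; [|lra]. unfold Rdiv in H.
      rewrite Rmult_assoc, Rinv_l in H; lra.
    - apply (Rmult_le_reg_r (vnorm2 n v)); auto. unfold Rdiv. rewrite Rmult_assoc, Rinv_l; lra. }
  assert (Hb : bound E).
  { exists (sumR n (fun j => sumR n (fun j' => (Cnorm2 (M j j') + 1) / 2))).
    intros r [v [Hv ->]]. apply Hquot; auto. apply sesq_bounded. }
  assert (Hne : exists r, E r).
  { exists (Re (sesq n M (ek 0) (ek 0)) / vnorm2 n (ek 0)). exists (ek 0%nat). split; auto.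
    rewrite vnorm2_ek; auto; lra. }
  destruct (completeness E Hb Hne) as [mu [Hub Hlub]].
  exists mu. split.
  - intros v. destruct (Rle_lt_dec (vnorm2 n v) 0) as [h|h].
    + assert (H0 : vnorm2 n v = 0) by (pose proof (vnorm2_nonneg n v); lra).
      rewrite sesq_vnorm2_zero, H0 by auto. simpl; lra.
    + apply Hquot; auto. apply Hub. exists v; auto.
  - intros m Hm. apply Hlub. intros r [v [Hv ->]]. apply Hquot; auto.
Qed.

(* Every Hermitian matrix of positive size has a unit eigenvector: mu I - M is
   PSD for the top Rayleigh value mu, and it cannot be coercive. *)
Lemma hermitian_eigvec n M : hermitian n M -> (0 < n)%nat ->
  exists mu v, vnorm2 n v = 1 /\ forall i, (i < n)%nat -> mxv n M v i = Cmul (RtoC mu) (v i).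
Proof.
  intros HM Hn. destruct (rayleigh_sup n M Hn) as [mu [Hup Hleast]].
  set (N := fun i k => Csub (if Nat.eqb i k then RtoC mu else C0) (M i k)).
  assert (HN : hermitian n N).
  { intros i k Hi Hk. unfold N. rewrite Cconj_sub, (HM i k) by auto. rewrite Nat.eqb_sym.
    destruct (Nat.eqb i k); [rewrite Cconj_RtoC|rewrite Cconj_C0]; auto. }
  assert (HbN : forall v, Re (sesq n N v v) = mu * vnorm2 n v - Re (sesq n M v v)).
  { intros v. unfold N. rewrite sesq_sub, sesq_scalar_mx, ip_self. simpl. ring. }
  assert (Hpsd : psd n N) by (intros v; rewrite HbN; specialize (Hup v); lra).
  destruct (psd_coercive_or_singular n N HN Hpsd) as [[c [Hc Hcv]] | [v [Hv Hker]]].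
  - exfalso. assert (mu <= mu - c); [|lra].
    apply Hleast. intros v. specialize (Hcv v). rewrite HbN in Hcv. lra.
  - exists mu, (fun i => Cmul (RtoC (/ sqrt (vnorm2 n v))) (v i)). split.
    + apply vnorm2_normalize; auto.
    + intros i Hi.
      assert (Hmv : mxv n M v i = Cmul (RtoC mu) (v i)).
      { symmetry. apply Csub_eq0. rewrite <- (Hker i Hi). unfold mxv, N.
        rewrite <- (sumC_delta n i (fun k => Cmul (RtoC mu) (v k))) by auto.
        rewrite <- sumC_sub. apply sumC_ext; intros k Hk.
        destruct (Nat.eqb_spec k i), (Nat.eqb_spec i k); try lia; ring. }
      transitivity (Cmul (RtoC (/ sqrt (vnorm2 n v))) (mxv n M v i)).
      * unfold mxv. rewrite <- sumC_scal_l. apply sumC_ext; intros; ring.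
      * rewrite Hmv; ring.
Qed.

(** * Completing a unit vector to a unitary matrix (Householder reflection) *)

Definition householder n (w : nat -> Cpx) :=
  fun i k => Csub (kron i k) (Cmul (RtoC (2 / vnorm2 n w)) (Cmul (w i) (Cconj (w k)))).

Lemma householder_adjoint n w i k : Cconj (householder n w k i) = householder n w i k.
Proof.
  unfold householder. rewrite Cconj_sub, kron_conj, !Cconj_mul, Cconj_conj, Cconj_RtoC. ring.
Qed.

(* H is an involution (for w = 0 it is the identity). *)
Lemma householder_involutive n w i j : (i < n)%nat -> (j < n)%nat ->
  sumC n (fun k => Cmul (householder n w i k) (householder n w k j)) = kron i j.
Proof.
  intros Hi Hj. unfold householder. set (kap := RtoC (2 / vnorm2 n w)).
  rewrite (sumC_ext n _ (fun k => Cadd (Csub (Cmul (kron i k) (kron k j))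
       (Cadd (Cmul (kron i k) (Cmul kap (Cmul (w k) (Cconj (w j)))))
             (Cmul (Cmul kap (Cmul (w i) (Cconj (w k)))) (kron k j))))
       (Cmul (Cmul (Cmul kap kap) (Cmul (w i) (Cconj (w j)))) (Cmul (Cconj (w k)) (w k)))))
    by (intros; ring).
  rewrite sumC_add, sumC_sub, sumC_add, sumC_scal_l.
  rewrite (sum_kron_l n i (fun k => kron k j)), (sum_kron_l n i (fun k => Cmul kap (Cmul (w k) (Cconj (w j))))),
    (sum_kron_r n j (fun k => Cmul kap (Cmul (w i) (Cconj (w k))))) by auto.
  change (sumC n (fun k => Cmul (Cconj (w k)) (w k))) with (ip n w w). rewrite ip_self.
  destruct (Req_EM_T (vnorm2 n w) 0) as [e|e].
  - rewrite (vnorm2_zero_inv n w e i Hi). ring.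
  - unfold kap. Csimpl; field; auto.
Qed.

Lemma householder_swap n x v r :
  vnorm2 n x = 1 -> vnorm2 n v = 1 -> ip n x v = RtoC r ->
  forall i, (i < n)%nat -> mxv n (householder n (fun k => Csub (x k) (v k))) x i = v i.
Proof.
  intros Hx Hv Hxv i Hi. set (w := fun k => Csub (x k) (v k)).
  assert (Hvx : ip n v x = RtoC r) by (rewrite <- ip_conj, Hxv, Cconj_RtoC; auto).
  assert (Hc : vnorm2 n w = 2 - 2 * r).
  { rewrite vnorm2_Re. unfold w. rewrite ip_sub_l, !ip_sub_r, Hxv, Hvx, !ip_self, Hx, Hv.
    simpl. ring. }
  assert (Hwx : ip n w x = RtoC (1 - r)).
  { unfold w. rewrite ip_sub_l, Hvx, ip_self, Hx. Csimpl; ring. }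
  unfold mxv, householder.
  rewrite (sumC_ext n _ (fun k => Csub (Cmul (kron i k) (x k))
             (Cmul (Cmul (RtoC (2 / vnorm2 n w)) (w i)) (Cmul (Cconj (w k)) (x k)))))
    by (intros; ring).
  rewrite sumC_sub, sum_kron_l, sumC_scal_l by auto. change (sumC n _) with (ip n w x).
  rewrite Hwx. destruct (Req_EM_T r 1) as [e|e].
  - assert (Hw0 : w i = C0) by (apply (vnorm2_zero_inv n w); auto; lra).
    rewrite Hw0. unfold w in Hw0. rewrite (Csub_eq0 _ _ Hw0). ring.
  - rewrite Hc. unfold w. Csimpl; field; lra.
Qed.

Lemma polar_phase z : exists om, Cnorm2 om = 1 /\ Cmul (Cconj om) z = RtoC (sqrt (Cnorm2 z)).
Proof.
  set (r := sqrt (Cnorm2 z)).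
  assert (Hr2 : r * r = Cnorm2 z) by (apply sqrt_sqrt, Cnorm2_nonneg).
  destruct (Req_EM_T r 0) as [e|e].
  - exists Cone. split. unfold Cnorm2; simpl; ring.
    assert (z = C0) by (apply Cnorm2_zero; rewrite <- Hr2, e; ring).
    subst z. fold r. rewrite e. Csimpl; ring.
  - exists (Cmul z (RtoC (/ r))). split.
    + rewrite Cnorm2_mul, Cnorm2_RtoC, <- Hr2. field; auto.
    + fold r. rewrite Cconj_mul, Cconj_RtoC.
      transitivity (Cmul (RtoC (Cnorm2 z)) (RtoC (/ r))). rewrite <- Cmul_conj_l; ring.
      rewrite <- RtoC_mul, <- Hr2. f_equal. field; auto.
Qed.

Lemma extend_unit n v : vnorm2 (S n) v = 1 ->
  exists Q, unitary (S n) Q /\ unitary_rows (S n) Q /\ forall i, (i < S n)%nat -> Q i 0%nat = v i.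
Proof.
  intros Hv. set (m := S n).
  destruct (polar_phase (v 0%nat)) as [om [Hom Hphase]].
  set (x := fun i => Cmul om (ek 0 i)).
  assert (Hx : vnorm2 m x = 1).
  { unfold x. rewrite vnorm2_scal, vnorm2_ek by (unfold m; lia). lra. }
  assert (Hxv : ip m x v = RtoC (sqrt (Cnorm2 (v 0%nat)))).
  { unfold x. rewrite ip_scal_l, ip_ek by (unfold m; lia). exact Hphase. }
  set (H := householder m (fun k => Csub (x k) (v k))).
  set (d := fun k => if Nat.eqb k 0 then om else Cone).
  assert (Hd : forall k, Cmul (Cconj (d k)) (d k) = Cone).
  { intros k. unfold d. destruct (Nat.eqb k 0). rewrite Cmul_conj_l, Hom; auto. Csimpl; ring. }
  assert (HH : forall i j, (i < m)%nat -> (j < m)%nat -> sumC m (fun k => Cmul (H i k) (H k j)) = kron i j)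
    by (intros; apply householder_involutive; auto).
  (* Q = H diag(d), so that the first column of Q is H x = v *)
  exists (fun i k => Cmul (H i k) (d k)). split; [|split].
  - intros i j Hi Hj. change (if Nat.eqb i j then RtoC 1 else C0) with (kron i j).
    rewrite (sumC_ext m _ (fun k => Cmul (Cmul (Cconj (d i)) (d j)) (Cmul (H i k) (H k j)))).
    2:{ intros k Hk. rewrite Cconj_mul. unfold H. rewrite householder_adjoint. ring. }
    rewrite sumC_scal_l, HH by auto. unfold kron. destruct (Nat.eqb_spec i j).
    subst; rewrite Hd; ring. ring.
  - intros i j Hi Hj. rewrite <- HH by auto. apply sumC_ext; intros k Hk.
    rewrite Cconj_mul. unfold H. rewrite (householder_adjoint m _ k j).
    transitivity (Cmul (Cmul (householder m (fun k => Csub (x k) (v k)) i k)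
                             (householder m (fun k => Csub (x k) (v k)) k j))
                       (Cmul (Cconj (d k)) (d k))); [ring|]. rewrite Hd; ring.
  - intros i Hi. rewrite <- (householder_swap m x v _ Hx Hv Hxv i Hi).
    unfold mxv. fold H.
    rewrite (sumC_ext m _ (fun k => Cmul om (Cmul (H i k) (kron k 0)))) by (intros; unfold x, ek; ring).
    rewrite sumC_scal_l, (sum_kron_r m 0 (fun k => H i k)) by (unfold m; lia).
    unfold d; simpl. ring.
Qed.

(** * The spectral theorem *)

Definition mxmul n (A B : nat -> nat -> Cpx) := fun i k => sumC n (fun a => Cmul (A i a) (B a k)).
Definition diag1 (U : nat -> nat -> Cpx) := fun a k =>
  match a, k with O, O => Cone | O, S _ => C0 | S _, O => C0 | S a', S k' => U a' k' end.
Definition scons (mu : R) (lam : nat -> R) := fun l => match l with O => mu | S l' => lam l' end.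

Lemma unitary_kron n U : unitary n U <-> forall i j, (i < n)%nat -> (j < n)%nat ->
  sumC n (fun k => Cmul (Cconj (U k i)) (U k j)) = kron i j.
Proof. unfold unitary; split; intros H; exact H. Qed.

Lemma unitary_mxmul n A B : unitary n A -> unitary n B -> unitary n (mxmul n A B).
Proof.
  rewrite !unitary_kron. intros HA HB i j Hi Hj. unfold mxmul.
  rewrite (sumC_ext n _ (fun k => sumC n (fun a => sumC n (fun b =>
     Cmul (Cmul (Cconj (B a i)) (B b j)) (Cmul (Cconj (A k a)) (A k b)))))).
  2:{ intros k Hk. rewrite sumC_conj, sumC_mul. apply sumC_ext; intros; apply sumC_ext; intros.
      rewrite Cconj_mul; ring. }
  rewrite sumC_swap, (sumC_ext n _ (fun a => Cmul (Cconj (B a i)) (B a j))); [apply HB; auto|].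
  intros a Ha. rewrite sumC_swap.
  rewrite (sumC_ext n _ (fun b => Cmul (kron a b) (Cmul (Cconj (B a i)) (B b j)))).
  - apply (sum_kron_l n a (fun b => Cmul (Cconj (B a i)) (B b j))); auto.
  - intros b Hb. rewrite sumC_scal_l, HA; auto. ring.
Qed.

Lemma unitary_rows_mxmul n A B : unitary_rows n A -> unitary_rows n B -> unitary_rows n (mxmul n A B).
Proof.
  intros HA HB i j Hi Hj. unfold mxmul.
  rewrite (sumC_ext n _ (fun k => sumC n (fun a => sumC n (fun b =>
     Cmul (Cmul (A i a) (Cconj (A j b))) (Cmul (B a k) (Cconj (B b k))))))).
  2:{ intros k Hk. rewrite sumC_conj, sumC_mul. apply sumC_ext; intros; apply sumC_ext; intros.
      rewrite Cconj_mul; ring. }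
  rewrite sumC_swap, (sumC_ext n _ (fun a => Cmul (A i a) (Cconj (A j a)))); [apply HA; auto|].
  intros a Ha. rewrite sumC_swap.
  rewrite (sumC_ext n _ (fun b => Cmul (kron a b) (Cmul (A i a) (Cconj (A j b))))).
  - apply (sum_kron_l n a (fun b => Cmul (A i a) (Cconj (A j b)))); auto.
  - intros b Hb. rewrite sumC_scal_l, HB; auto. ring.
Qed.

Lemma spec_decomp_conj n M Q B V lam : unitary_rows n Q ->
  (forall a b, (a < n)%nat -> (b < n)%nat -> B a b = sesq n M (col Q a) (col Q b)) ->
  spec_decomp n B V lam -> spec_decomp n M (mxmul n Q V) lam.
Proof.
  intros HQ HB HV i k Hi Hk.
  set (Y := fun a b j j' => Cmul (Cmul (Cmul (Q i a) (Cconj (Q j a))) (M j j')) (Cmul (Q j' b) (Cconj (Q k b)))).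
  (* both sides equal Σ_{a,b,j,j'} Y a b j j' *)
  transitivity (sumC n (fun a => sumC n (fun b => sumC n (fun j => sumC n (fun j' => Y a b j j'))))).
  - transitivity (sumC n (fun j => sumC n (fun j' => sumC n (fun a => sumC n (fun b => Y a b j j'))))).
    + rewrite <- (sum_kron_l n i (fun j => M j k)) by auto.
      apply sumC_ext; intros j Hj. rewrite <- (sum_kron_r n k (fun j' => Cmul (kron i j) (M j j'))) by auto.
      apply sumC_ext; intros j' Hj'. rewrite <- (HQ i j), <- (HQ j' k) by auto.
      rewrite <- sumC_scal_r, sumC_mul. apply sumC_ext; intros; apply sumC_ext; intros.
      unfold Y; ring.
    + rewrite (sumC_ext n _ (fun j => sumC n (fun a => sumC n (fun j' => sumC n (fun b => Y a b j j')))))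
        by (intros; apply sumC_swap).
      rewrite sumC_swap. apply sumC_ext; intros a Ha.
      rewrite (sumC_ext n _ (fun j => sumC n (fun b => sumC n (fun j' => Y a b j j'))))
        by (intros; apply sumC_swap).
      apply sumC_swap.
  - unfold mxmul. symmetry.
    transitivity (sumC n (fun a => sumC n (fun b => Cmul (Cmul (Q i a) (Cconj (Q k b))) (B a b)))).
    + transitivity (sumC n (fun l => sumC n (fun a => sumC n (fun b =>
         Cmul (Cmul (Q i a) (Cconj (Q k b))) (Cmul (Cmul (V a l) (RtoC (lam l))) (Cconj (V b l))))))).
      * apply sumC_ext; intros l Hl. rewrite sumC_conj, <- sumC_scal_r, sumC_mul.
        apply sumC_ext; intros. apply sumC_ext; intros. rewrite Cconj_mul; ring.
      * rewrite sumC_swap. apply sumC_ext; intros a Ha. rewrite sumC_swap. apply sumC_ext; intros b Hb.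
        rewrite sumC_scal_l, (HV a b) by auto. auto.
    + apply sumC_ext; intros a Ha; apply sumC_ext; intros b Hb. rewrite HB by auto. unfold sesq.
      rewrite <- sumC_scal_l. apply sumC_ext; intros j Hj. rewrite <- sumC_scal_l.
      apply sumC_ext; intros j' Hj'. unfold Y, col; ring.
Qed.

Lemma unitary_diag1 n U : unitary n U -> unitary (S n) (diag1 U).
Proof.
  rewrite !unitary_kron. intros HU i j Hi Hj. rewrite sumC_first.
  destruct i as [|i], j as [|j]; simpl diag1.
  - rewrite sumC_zero; [Csimpl; ring|]. intros; Csimpl; ring.
  - rewrite sumC_zero; [unfold kron; simpl; Csimpl; ring|]. intros; Csimpl; ring.
  - rewrite sumC_zero; [unfold kron; simpl; Csimpl; ring|]. intros; Csimpl; ring.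
  - rewrite HU by lia. unfold kron; simpl. Csimpl; ring.
Qed.
Lemma unitary_rows_diag1 n U : unitary_rows n U -> unitary_rows (S n) (diag1 U).
Proof.
  intros HU i j Hi Hj. rewrite sumC_first.
  destruct i as [|i], j as [|j]; simpl diag1.
  - rewrite sumC_zero; [Csimpl; ring|]. intros; Csimpl; ring.
  - rewrite sumC_zero; [unfold kron; simpl; Csimpl; ring|]. intros; Csimpl; ring.
  - rewrite sumC_zero; [unfold kron; simpl; Csimpl; ring|]. intros; Csimpl; ring.
  - rewrite HU by lia. unfold kron; simpl. Csimpl; ring.
Qed.

Lemma spec_decomp_diag1 n B U lam mu :
  B 0%nat 0%nat = RtoC mu ->
  (forall k, (k < n)%nat -> B 0%nat (S k) = C0) ->
  (forall k, (k < n)%nat -> B (S k) 0%nat = C0) ->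
  spec_decomp n (minor0 B) U lam ->
  spec_decomp (S n) B (diag1 U) (scons mu lam).
Proof.
  intros H00 H0S HS0 HU i k Hi Hk. rewrite sumC_first.
  destruct i as [|i], k as [|k]; simpl diag1; simpl scons.
  - rewrite sumC_zero. rewrite H00; Csimpl; ring. intros; Csimpl; ring.
  - rewrite sumC_zero. rewrite H0S by lia; Csimpl; ring. intros; Csimpl; ring.
  - rewrite sumC_zero. rewrite HS0 by lia; Csimpl; ring. intros; Csimpl; ring.
  - change (B (S i) (S k)) with (minor0 B i k). rewrite (HU i k) by lia. Csimpl; ring.
Qed.

Theorem spectral n : forall M, hermitian n M ->
  exists U lam, unitary n U /\ unitary_rows n U /\ spec_decomp n M U lam.
Proof.
  induction n; intros M HM.
  - exists (fun _ _ => C0), (fun _ => 0). unfold unitary, unitary_rows, spec_decomp. repeat split; intros; lia.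
  - destruct (hermitian_eigvec (S n) M HM ltac:(lia)) as [mu [v [Hv Hmv]]].
    destruct (extend_unit n v Hv) as [Q [HQu [HQc HQ0]]].
    (* B = Q^† M Q has first column mu e_0 *)
    set (B := fun a b => sesq (S n) M (col Q a) (col Q b)).
    assert (HBh : hermitian (S n) B) by (intros a b Ha Hb; unfold B; rewrite sesq_hermitian; auto).
    assert (HB0 : forall a, (a < S n)%nat -> B a 0%nat = Cmul (RtoC mu) (kron a 0)).
    { intros a Ha. unfold B. rewrite sesq_ip_mxv.
      rewrite (ip_ext (S n) (col Q a) (col Q a) _ (fun j => Cmul (RtoC mu) (col Q 0%nat j))); auto.
      - rewrite ip_scal_r. f_equal. apply (proj1 (unitary_kron _ _) HQu); lia.
      - intros j Hj. unfold mxv, col. rewrite (sumC_ext (S n) _ (fun k => Cmul (M j k) (v k)))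
          by (intros; rewrite HQ0; auto).
        rewrite HQ0 by auto. apply Hmv; auto. }
    assert (HM' : hermitian n (minor0 B)) by (intros i k Hi Hk; apply HBh; lia).
    destruct (IHn _ HM') as [U' [lam' [HU'u [HU'c HU's]]]].
    exists (mxmul (S n) Q (diag1 U')), (scons mu lam'). split; [|split].
    + apply unitary_mxmul; auto. apply unitary_diag1; auto.
    + apply unitary_rows_mxmul; auto. apply unitary_rows_diag1; auto.
    + apply (spec_decomp_conj (S n) M Q B); auto.
      apply spec_decomp_diag1; auto.
      * rewrite HB0 by lia. unfold kron; simpl. Csimpl; ring.
      * intros k Hk. rewrite (HBh (S k) 0%nat), HB0 by lia. unfold kron; simpl. Csimpl; ring.
      * intros k Hk. rewrite HB0 by lia. unfold kron; simpl. Csimpl; ring.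
Qed.

Lemma spectrum_ok n M : hermitian n M -> exists U, unitary n U /\ spec_decomp n M U (spectrum n M).
Proof.
  intros H. unfold spectrum.
  assert (Hex : exists lam, is_spectrum n M lam).
  { destruct (spectral n M H) as [U [lam [HU [_ HS]]]]. exists lam, U; split; auto. }
  pose proof (epsilon_spec (inhabits (fun _ : nat => 0)) (fun lam => is_spectrum n M lam) Hex) as [U [HU HS]].
  exists U; split; auto.
Qed.

(** * The convex function x ln x *)

Definition xlnx (x : R) := if Rle_dec x 0 then 0 else x * ln x.

Lemma xlog2x_xlnx x : xlog2x x = xlnx x / ln 2.
Proof. unfold xlog2x, xlnx, log2. destruct Rle_dec; unfold Rdiv; ring. Qed.

Lemma ln_le_sub1 z : 0 < z -> ln z <= z - 1.
Proof. intros H. pose proof (exp_ineq1_le (ln z)). rewrite exp_ln in H0; lra. Qed.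

Lemma ln_le x y : 0 < x -> x <= y -> ln x <= ln y.
Proof. intros H1 H2. destruct H2 as [h|h]. left; apply ln_increasing; auto. subst; lra. Qed.

Lemma ln_nonpos x : 0 < x -> x <= 1 -> ln x <= 0.
Proof. intros; rewrite <- ln_1; apply ln_le; auto. Qed.

Lemma xlnx_nonpos x : x <= 1 -> xlnx x <= 0.
Proof.
  intros H. unfold xlnx. destruct Rle_dec. lra. apply Rnot_le_lt in n.
  pose proof (ln_nonpos x n H). nra.
Qed.

(* φ(t x) = x φ(t) + t φ(x): the chain rule of entropy for a weighted mixture. *)
Lemma xlnx_mul t x : 0 < t -> 0 <= x -> xlnx (t * x) = x * xlnx t + t * xlnx x.
Proof.
  intros Ht Hx. destruct Hx as [Hx|Hx].
  - unfold xlnx. destruct Rle_dec. nra. destruct Rle_dec; [lra|]. destruct Rle_dec; [lra|].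
    rewrite ln_mult by lra. ring.
  - subst. rewrite Rmult_0_r. unfold xlnx. destruct Rle_dec; [|lra]. destruct Rle_dec; [|lra]. ring.
Qed.

Lemma xlnx_tangent x0 y : 0 < x0 -> 0 <= y -> y * ln x0 + y - x0 <= xlnx y.
Proof.
  intros H0 Hy. unfold xlnx. destruct Rle_dec.
  - assert (y = 0) by lra. subst. lra.
  - apply Rnot_le_lt in n.
    pose proof (ln_le_sub1 (x0 / y)). assert (0 < x0 / y) by (apply Rdiv_lt_0_compat; lra).
    specialize (H H1). unfold Rdiv in H. rewrite ln_mult, ln_Rinv in H by (try apply Rinv_0_lt_compat; lra).
    apply (Rmult_le_compat_l y) in H; [|lra].
    replace (y * (x0 * / y - 1)) with (x0 - y) in H by (field; lra). nra.
Qed.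

(* Jensen's inequality for φ with sub-probability weights (φ(0) = 0). *)
Lemma jensen L (pi y : nat -> R) :
  (forall l, (l < L)%nat -> 0 <= pi l) -> (forall l, (l < L)%nat -> 0 <= y l) ->
  sumR L pi <= 1 ->
  xlnx (sumR L (fun l => pi l * y l)) <= sumR L (fun l => pi l * xlnx (y l)).
Proof.
  intros Hpi Hy Hs. set (x0 := sumR L (fun l => pi l * y l)).
  assert (Hx0 : 0 <= x0) by (apply sumR_nonneg; intros; apply Rmult_le_pos; auto).
  destruct Hx0 as [Hx0|Hx0].
  - assert (sumR L (fun l => pi l * (y l * ln x0 + y l - x0)) <= sumR L (fun l => pi l * xlnx (y l))).
    { apply sumR_le; intros. apply Rmult_le_compat_l; auto. apply xlnx_tangent; auto. }
    assert (E : sumR L (fun l => pi l * (y l * ln x0 + y l - x0)) = x0 * ln x0 + x0 - sumR L pi * x0).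
    { rewrite (sumR_ext L _ (fun l => pi l * y l * ln x0 + pi l * y l - pi l * x0)) by (intros; ring).
      rewrite !sumR_minus, !sumR_add, !sumR_scal_r. fold x0. ring. }
    unfold xlnx at 1. destruct Rle_dec. lra. nra.
  - rewrite <- Hx0. unfold xlnx at 1. destruct Rle_dec; [|lra].
    rewrite sumR_zero. lra. intros l Hl.
    assert (pi l * y l = 0).
    { apply (sumR_zero_inv L (fun l => pi l * y l)); auto. intros; apply Rmult_le_pos; auto. }
    destruct (Rmult_integral _ _ H) as [h|h]. rewrite h; ring. unfold xlnx; rewrite h.
    destruct Rle_dec; [ring|lra].
Qed.

(* Majorization estimate: for an orthogonal family v_a and vectors u_b of
   norm <= 1 satisfying Parseval against each v_a, the matrix |<u_b,v_a>|²
   is a doubly substochastic transfer of the weights ‖v_a‖², so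
   Σ_b φ(Σ_a |<u_b,v_a>|²) <= Σ_a φ(‖v_a‖²) (Jensen row by row, then Bessel). *)
Lemma xlnx_contraction d A B (v u : nat -> nat -> Cpx) :
  (forall a b, (a < A)%nat -> (b < A)%nat -> a <> b -> ip d (v a) (v b) = C0) ->
  (forall b, (b < B)%nat -> vnorm2 d (u b) <= 1) ->
  (forall a, (a < A)%nat -> sumR B (fun b => Cnorm2 (ip d (u b) (v a))) = vnorm2 d (v a)) ->
  sumR B (fun b => xlnx (sumR A (fun a => Cnorm2 (ip d (u b) (v a)))))
    <= sumR A (fun a => xlnx (vnorm2 d (v a))).
Proof.
  intros Horth Hu Hpars.
  set (D := fun b a => proj_weight d (v a) (u b)).
  assert (HC : forall a b, Cnorm2 (ip d (u b) (v a)) = Cnorm2 (ip d (v a) (u b))).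
  { intros; rewrite <- ip_conj, Cnorm2_conj; auto. }
  assert (E1 : forall b, sumR A (fun a => Cnorm2 (ip d (u b) (v a))) = sumR A (fun a => D b a * vnorm2 d (v a))).
  { intros b. apply sumR_ext; intros a Ha. unfold D, proj_weight. destruct Rle_dec.
    - assert (vnorm2 d (v a) = 0) by (pose proof (vnorm2_nonneg d (v a)); lra).
      rewrite ip_zero_r by (apply vnorm2_zero_inv; auto). unfold Cnorm2; simpl; ring.
    - apply Rnot_le_lt in n. rewrite HC. field. lra. }
  apply (Rle_trans _ (sumR B (fun b => sumR A (fun a => D b a * xlnx (vnorm2 d (v a)))))).
  - apply sumR_le; intros b Hb. rewrite E1. apply jensen.
    + intros; apply proj_weight_nonneg.
    + intros; apply vnorm2_nonneg.
    + eapply Rle_trans; [apply bessel; auto|]. apply Hu; auto.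
  - rewrite sumR_swap. right. apply sumR_ext; intros a Ha.
    rewrite sumR_scal_r. unfold D, proj_weight. destruct Rle_dec.
    + assert (vnorm2 d (v a) = 0) by (pose proof (vnorm2_nonneg d (v a)); lra).
      rewrite H. unfold xlnx. destruct Rle_dec; [ring|lra].
    + apply Rnot_le_lt in n.
      rewrite (sumR_ext B _ (fun b => Cnorm2 (ip d (u b) (v a)) * / vnorm2 d (v a))) by (intros; rewrite HC; auto).
      rewrite sumR_scal_r, Hpars by auto. field_simplify; [ring|lra].
Qed.

Lemma log_sum_ineq a b s : 0 < a -> 0 < b -> 0 < s < 1 ->
  (a + b) * ln (a + b) <= a * ln (a / s) + b * ln (b / (1 - s)).
Proof.
  intros Ha Hb Hs. set (T := a + b).
  (* each term is bounded by the tangent inequality ln z <= z - 1 *)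
  assert (Htan : forall x p, 0 < x -> 0 < p -> x - p * T <= x * ln (x / p) - x * ln T).
  { intros x p Hx Hp.
    pose proof (ln_le_sub1 (p * T / x)). assert (0 < p * T / x) by (unfold T; apply Rdiv_lt_0_compat; nra).
    specialize (H H0). unfold Rdiv in *.
    rewrite ln_mult, ln_mult, ln_Rinv in H by (try apply Rinv_0_lt_compat; unfold T; nra).
    rewrite ln_mult, ln_Rinv by (try apply Rinv_0_lt_compat; lra).
    apply (Rmult_le_compat_l x) in H; [|lra].
    replace (x * (p * T * / x - 1)) with (p * T - x) in H by (field; lra). nra. }
  pose proof (Htan a s Ha ltac:(lra)). pose proof (Htan b (1 - s) Hb ltac:(lra)).
  unfold T in *. nra.
Qed.

Lemma xlnx_split_bound a b s : 0 <= a -> 0 <= b -> 0 < s <= 1 -> b <= 1 - s ->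
  xlnx (a + b) <= s * xlnx (a / s).
Proof.
  intros Ha Hb Hs Hbs.
  destruct Ha as [Ha|Ha]; destruct Hb as [Hb|Hb].
  - assert (s < 1) by lra.
    assert (0 < a / s) by (apply Rdiv_lt_0_compat; lra).
    unfold xlnx. destruct Rle_dec; [lra|]. destruct Rle_dec; [lra|].
    pose proof (log_sum_ineq a b s Ha Hb ltac:(lra)).
    assert (b / (1 - s) <= 1).
    { apply (Rmult_le_reg_l (1 - s)); [lra|]. unfold Rdiv.
      replace ((1 - s) * (b * / (1 - s))) with b by (field; lra). lra. }
    assert (ln (b / (1 - s)) <= 0) by (apply ln_nonpos; auto; apply Rdiv_lt_0_compat; lra).
    assert (b * ln (b / (1 - s)) <= 0) by nra.
    replace (s * (a / s * ln (a / s))) with (a * ln (a / s)) by (field; lra). lra.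
  - subst b. rewrite Rplus_0_r. unfold xlnx. destruct Rle_dec; [lra|].
    assert (0 < a / s) by (apply Rdiv_lt_0_compat; lra). destruct Rle_dec; [lra|].
    replace (s * (a / s * ln (a / s))) with (a * ln (a / s)) by (field; lra).
    apply Rmult_le_compat_l; [lra|]. apply ln_le; auto.
    apply (Rmult_le_reg_l s); [lra|]. unfold Rdiv. replace (s * (a * / s)) with a by (field; lra). nra.
  - subst a. rewrite Rplus_0_l. unfold Rdiv; rewrite Rmult_0_l.
    replace (xlnx 0) with 0 by (unfold xlnx; destruct Rle_dec; lra). rewrite Rmult_0_r.
    apply xlnx_nonpos. lra.
  - subst. rewrite Rplus_0_l. unfold Rdiv; rewrite Rmult_0_l. unfold xlnx. destruct Rle_dec; lra.
Qed.

(* If c <= lam y termwise, Σ y = 1 and Σ c = g > 0, then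
   Σ φ(y_l) <= (g/lam) Σ φ(c_l/g): split y_l = c_l/lam + (y_l - c_l/lam). *)
Lemma xlnx_dominated n (c y : nat -> R) g lam : 0 < g ->
  (forall l, (l < n)%nat -> 0 <= c l) -> (forall l, (l < n)%nat -> c l <= lam * y l) ->
  sumR n y = 1 -> sumR n c = g ->
  sumR n (fun l => xlnx (y l)) <= g / lam * sumR n (fun l => xlnx (c l / g)).
Proof.
  intros Hg Hc Hcy Sy Sc.
  assert (Hglam : g <= lam).
  { rewrite <- Sc. replace lam with (lam * sumR n y) by (rewrite Sy; ring).
    rewrite <- sumR_scal_l. apply sumR_le; auto. }
  assert (Hrest : forall l, (l < n)%nat -> 0 <= y l - c l / lam).
  { intros l Hl. pose proof (Hcy l Hl).
    assert (c l / lam <= y l); [|lra].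
    apply (Rmult_le_reg_l lam); [lra|]. unfold Rdiv.
    replace (lam * (c l * / lam)) with (c l) by (field; lra). lra. }
  assert (Srest : sumR n (fun l => y l - c l / lam) = 1 - g / lam).
  { rewrite sumR_minus. unfold Rdiv. rewrite sumR_scal_r, Sy, Sc. ring. }
  rewrite <- sumR_scal_l. apply sumR_le; intros l Hl.
  pose proof (xlnx_split_bound (c l / lam) (y l - c l / lam) (g / lam)) as C.
  replace (c l / lam + (y l - c l / lam)) with (y l) in C by ring.
  replace (c l / lam / (g / lam)) with (c l / g) in C by (field; split; lra).
  apply C.
  - apply Rmult_le_pos; [auto| left; apply Rinv_0_lt_compat; lra].
  - auto.
  - split. apply Rdiv_lt_0_compat; lra. apply (Rmult_le_reg_l lam); [lra|].
    replace (lam * (g / lam)) with g by (field; lra). lra.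
  - rewrite <- Srest. apply (sumR_term_le n (fun l => y l - c l / lam)); auto.
Qed.

(** * Schmidt decomposition *)

Definition rhoA dA dB (v : bivec) := fun i k => Cmul (ptraceB dA dB v i k) (RtoC (/ norm2 dA dB v)).
(* The rows of v conjugated, seen as a family of dA vectors of C^dB; their
   Gram matrix is the (transposed, unnormalized) reduced state on B. *)
Definition conj_rows (v : bivec) := fun i j => Cconj (v i j).
Definition schmidt_vec dA (W : nat -> nat -> Cpx) (v : bivec) l :=
  fun j => sumC dA (fun i => Cmul (Cconj (W i l)) (v i j)).

Lemma hermitian_rhoA dA dB v : hermitian dA (rhoA dA dB v).
Proof.
  intros i k Hi Hk. unfold rhoA, ptraceB. rewrite Cconj_mul, Cconj_RtoC, sumC_conj. f_equal.
  apply sumC_ext; intros. rewrite Cconj_mul, Cconj_conj; ring.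
Qed.

Lemma entanglement_spectrum dA dB v :
  entanglement dA dB v = - sumR dA (fun l => xlnx (spectrum dA (rhoA dA dB v) l)) / ln 2.
Proof.
  unfold entanglement, vN_entropy. fold (rhoA dA dB v).
  rewrite (sumR_ext dA _ (fun l => xlnx (spectrum dA (rhoA dA dB v) l) * / ln 2))
    by (intros; rewrite xlog2x_xlnx; auto).
  rewrite sumR_scal_r. unfold Rdiv. ring.
Qed.

Section Schmidt.
Variables (dA dB : nat) (v : bivec) (W : nat -> nat -> Cpx) (r : nat -> R).
Hypothesis Hv : 0 < norm2 dA dB v.
Hypothesis HW : unitary dA W.
Hypothesis HS : spec_decomp dA (rhoA dA dB v) W r.

Lemma schmidt_ip l l' : (l < dA)%nat -> (l' < dA)%nat ->
  ip dB (schmidt_vec dA W v l) (schmidt_vec dA W v l')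
  = if Nat.eqb l l' then RtoC (norm2 dA dB v * r l) else C0.
Proof.
  intros Hl Hl'.
  transitivity (Cmul (RtoC (norm2 dA dB v)) (sesq dA (rhoA dA dB v) (col W l') (col W l))).
  - unfold ip, schmidt_vec, sesq, rhoA, ptraceB, col.
    rewrite (sumC_ext dB _ (fun j => sumC dA (fun b => sumC dA (fun a =>
        Cmul (Cmul (Cconj (W b l')) (Cmul (v b j) (Cconj (v a j)))) (W a l))))).
    2:{ intros j Hj. rewrite sumC_conj, sumC_mul, sumC_swap. apply sumC_ext; intros; apply sumC_ext; intros.
        rewrite Cconj_mul, Cconj_conj; ring. }
    rewrite <- sumC_scal_l, sumC_swap. apply sumC_ext; intros b Hb.
    rewrite sumC_swap, <- sumC_scal_l. apply sumC_ext; intros a Ha.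
    repeat rewrite <- sumC_scal_r. repeat rewrite <- sumC_scal_l.
    apply sumC_ext; intros j Hj. assert (norm2 dA dB v <> 0) by lra.
    Csimpl; field; auto.
  - rewrite (sesq_spec dA (rhoA dA dB v) W r) by auto. rewrite Nat.eqb_sym. destruct (Nat.eqb_spec l l').
    subst. rewrite <- RtoC_mul; auto. Csimpl; ring.
Qed.

Lemma schmidt_vnorm2 l : (l < dA)%nat -> vnorm2 dB (schmidt_vec dA W v l) = norm2 dA dB v * r l.
Proof. intros Hl. rewrite vnorm2_Re, schmidt_ip, Nat.eqb_refl by auto. reflexivity. Qed.

Lemma schmidt_weight_nonneg l : (l < dA)%nat -> 0 <= r l.
Proof.
  intros Hl. pose proof (vnorm2_nonneg dB (schmidt_vec dA W v l)). rewrite schmidt_vnorm2 in H by auto.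
  apply (Rmult_le_reg_l (norm2 dA dB v)); auto. lra.
Qed.

Lemma schmidt_weight_sum : sumR dA r = 1.
Proof.
  assert (E : sumR dA (fun i => Re (rhoA dA dB v i i)) = 1).
  { unfold rhoA, ptraceB.
    rewrite (sumR_ext dA _ (fun i => sumR dB (fun j => Cnorm2 (v i j)) * / norm2 dA dB v)).
    - rewrite sumR_scal_r. fold (norm2 dA dB v). field. lra.
    - intros i Hi. simpl Re. rewrite Re_sumC.
      rewrite (sumR_ext dB (fun j => Re (Cmul (v i j) (Cconj (v i j)))) (fun j => Cnorm2 (v i j)))
        by (intros; rewrite Cmul_conj_r; auto).
      replace (Im (sumC dB (fun j => Cmul (v i j) (Cconj (v i j))))) with 0.
      + ring.
      + rewrite (sumC_ext dB _ (fun j => RtoC (Cnorm2 (v i j)))) by (intros; apply Cmul_conj_r).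
        rewrite sumC_RtoC. reflexivity. }
  rewrite <- E. symmetry.
  rewrite (sumR_ext dA _ (fun i => sumR dA (fun l => Cnorm2 (W i l) * r l))).
  - rewrite sumR_swap. apply sumR_ext; intros l Hl. rewrite sumR_scal_r.
    pose proof (HW l l Hl Hl) as E1. rewrite Nat.eqb_refl in E1. apply (f_equal Re) in E1.
    rewrite Re_sumC in E1. change (Re (RtoC 1)) with 1 in E1.
    rewrite (sumR_ext dA (fun i => Cnorm2 (W i l)) (fun i => Re (Cmul (Cconj (W i l)) (W i l))))
      by (intros; rewrite Cmul_conj_l; auto).
    rewrite E1; ring.
  - intros i Hi. rewrite HS by auto. rewrite Re_sumC. apply sumR_ext; intros l Hl.
    simpl. unfold Cnorm2. ring.
Qed.

(* v_ij = Σ_l W_il (schmidt_vec l)_j: the residual of each column of v after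
   projection on the columns of W has total squared norm 0. *)
Lemma schmidt_expansion i j : (i < dA)%nat -> (j < dB)%nat ->
  v i j = sumC dA (fun l => Cmul (W i l) (schmidt_vec dA W v l j)).
Proof.
  intros Hi Hj.
  set (res := fun j i => Csub (v i j) (sumC dA (fun l => Cmul (ip dA (col W l) (fun i => v i j)) (col W l i)))).
  assert (Hres : forall j, vnorm2 dA (res j)
                   = vnorm2 dA (fun i => v i j) - sumR dA (fun l => Cnorm2 (schmidt_vec dA W v l j))).
  { intros j0. unfold res. rewrite bessel_residual. reflexivity. intros a b Ha Hb. apply HW; auto. }
  assert (Hsum : sumR dB (fun j => vnorm2 dA (res j)) = 0).
  { rewrite (sumR_ext dB _ _ (fun j _ => Hres j)), sumR_minus.
    unfold vnorm2 at 1. rewrite <- sumR_swap. fold (norm2 dA dB v).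
    rewrite sumR_swap, (sumR_ext dA _ (fun l => norm2 dA dB v * r l)).
    - rewrite sumR_scal_l, schmidt_weight_sum. ring.
    - intros l Hl. rewrite <- schmidt_vnorm2 by auto. reflexivity. }
  assert (H0 : vnorm2 dA (res j) = 0).
  { apply (sumR_zero_inv dB (fun j => vnorm2 dA (res j))); auto. intros; apply vnorm2_nonneg. }
  pose proof (vnorm2_zero_inv dA (res j) H0 i Hi) as E. unfold res, col in E.
  rewrite (Csub_eq0 _ _ E). apply sumC_ext; intros; unfold schmidt_vec, ip; ring.
Qed.

Lemma schmidt_gram j j' : (j < dB)%nat -> (j' < dB)%nat ->
  gram dA (fun l => conj_rows (schmidt_vec dA W v) l) j j' = gram dA (conj_rows v) j j'.
Proof.
  intros Hj Hj'. unfold gram, conj_rows. symmetry.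
  rewrite (sumC_ext dA _ (fun i => sumC dA (fun l => sumC dA (fun l' =>
     Cmul (Cmul (Cconj (schmidt_vec dA W v l j)) (schmidt_vec dA W v l' j')) (Cmul (Cconj (W i l)) (W i l')))))).
  2:{ intros i Hi. rewrite Cconj_conj, !schmidt_expansion by auto. rewrite sumC_conj, sumC_mul.
      apply sumC_ext; intros; apply sumC_ext; intros. rewrite Cconj_mul; ring. }
  rewrite sumC_swap. apply sumC_ext; intros l Hl. rewrite sumC_swap, Cconj_conj.
  rewrite (sumC_ext dA _ (fun l' => Cmul (kron l l') (Cmul (Cconj (schmidt_vec dA W v l j)) (schmidt_vec dA W v l' j')))).
  - apply (sum_kron_l dA l (fun l' => Cmul (Cconj (schmidt_vec dA W v l j)) (schmidt_vec dA W v l' j'))); auto.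
  - intros l' Hl'. rewrite sumC_scal_l, (proj1 (unitary_kron _ _) HW) by auto. ring.
Qed.
End Schmidt.

Definition schmidt_family dA dB (v : bivec) (p : nat -> R) (w : nat -> nat -> Cpx) :=
  (forall l l', (l < dA)%nat -> (l' < dA)%nat -> l <> l' -> ip dB (w l) (w l') = C0) /\
  (forall l, (l < dA)%nat -> vnorm2 dB (w l) = norm2 dA dB v * p l) /\
  (forall e, gram_weight dB dA w e = gram_weight dB dA (conj_rows v) e).

Lemma schmidt_decomposition dA dB v : 0 < norm2 dA dB v ->
  sumR dA (spectrum dA (rhoA dA dB v)) = 1 /\
  (forall l, (l < dA)%nat -> 0 <= spectrum dA (rhoA dA dB v) l) /\
  exists w, schmidt_family dA dB v (spectrum dA (rhoA dA dB v)) w.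
Proof.
  intros Hv. destruct (spectrum_ok dA (rhoA dA dB v) (hermitian_rhoA dA dB v)) as [W [HW HS]].
  split; [|split].
  - apply (schmidt_weight_sum dA dB v W); auto.
  - intros l Hl. apply (schmidt_weight_nonneg dA dB v W); auto.
  - exists (conj_rows (schmidt_vec dA W v)). split; [|split].
    + intros l l' Hl Hl' Hne. unfold conj_rows.
      rewrite ip_conjvec, (schmidt_ip dA dB v W (spectrum dA (rhoA dA dB v))) by auto.
      destruct (Nat.eqb_spec l' l); [lia|auto].
    + intros l Hl. unfold conj_rows. rewrite vnorm2_conjvec. apply schmidt_vnorm2; auto.
    + intros e. apply gram_weight_eq. intros; apply (schmidt_gram dA dB v W (spectrum dA (rhoA dA dB v))); auto.
Qed.

(** * Entropy comparison under operator domination *)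

Lemma gram_weight_nonneg n K f e : 0 <= gram_weight n K f e.
Proof. apply sumR_nonneg; intros; apply Cnorm2_nonneg. Qed.

Lemma gram_weight_basis_sum n K f E : unitary_rows n E ->
  sumR n (fun l => gram_weight n K f (col E l)) = sumR K (fun k => vnorm2 n (f k)).
Proof.
  intros HE. unfold gram_weight. rewrite sumR_swap. apply sumR_ext; intros. apply parseval; auto.
Qed.

Lemma eigenvalue_gram_weight n K f E y l : unitary n E -> spec_decomp n (gram K f) E y ->
  (l < n)%nat -> y l = gram_weight n K f (col E l).
Proof.
  intros HE HY Hl. apply RtoC_inj. rewrite <- sesq_gram_diag, (sesq_spec n (gram K f) E y) by auto.
  rewrite Nat.eqb_refl; auto.
Qed.

(* The spectrum of Σ_k f_k f_k^† is majorized by the ensemble weights ‖f_k‖²: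
   the vectors (<E_l, f_k>)_k of C^K are orthogonal with squared norms y_l. *)
Lemma ensemble_xlnx_le_spectrum n K f E y :
  unitary n E -> unitary_rows n E -> spec_decomp n (gram K f) E y ->
  sumR K (fun k => xlnx (vnorm2 n (f k))) <= sumR n (fun l => xlnx (y l)).
Proof.
  intros HEu HEc HY.
  set (v := fun l k => ip n (col E l) (f k)).
  pose proof (xlnx_contraction K n K v ek) as B.
  rewrite (sumR_ext K _ (fun b => xlnx (vnorm2 n (f b)))) in B.
  - rewrite (sumR_ext n _ (fun l => xlnx (y l))) in B.
    + apply B.
      * intros a b Ha Hb Hab. unfold ip at 1, v.
        transitivity (sesq n (gram K f) (col E b) (col E a)).
        -- rewrite sesq_gram. apply sumC_ext; intros k Hk. rewrite ip_conj. ring.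
        -- rewrite (sesq_spec n (gram K f) E y b a) by auto. destruct (Nat.eqb_spec b a); [lia|auto].
      * intros b Hb. rewrite vnorm2_ek; auto; lra.
      * intros l Hl. apply parseval_std.
    + intros l Hl. rewrite (eigenvalue_gram_weight n K f E y l) by auto. reflexivity.
  - intros b Hb. f_equal. rewrite <- (parseval n E (f b)) by auto. apply sumR_ext; intros l Hl.
    rewrite ip_ek; auto.
Qed.

Lemma basis_xlnx_le_orthogonal n A w E s : 0 < s -> unitary n E -> unitary_rows n E ->
  (forall a b, (a < A)%nat -> (b < A)%nat -> a <> b -> ip n (w a) (w b) = C0) ->
  sumR n (fun l => xlnx (s * gram_weight n A w (col E l))) <= sumR A (fun a => xlnx (s * vnorm2 n (w a))).
Proof.
  intros Hs HEu HEc Hw.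
  set (ws := fun a j => Cmul (RtoC (sqrt s)) (w a j)).
  assert (Hss : Cnorm2 (RtoC (sqrt s)) = s) by (rewrite Cnorm2_RtoC; apply sqrt_sqrt; lra).
  pose proof (xlnx_contraction n A n ws (col E)) as B.
  rewrite (sumR_ext n _ (fun l => xlnx (s * gram_weight n A w (col E l)))) in B.
  - rewrite (sumR_ext A _ (fun a => xlnx (s * vnorm2 n (w a)))) in B.
    + apply B.
      * intros a b Ha Hb Hab. unfold ws. rewrite ip_scal_l, ip_scal_r, Hw by auto. Csimpl; ring.
      * intros b Hb. rewrite vnorm2_col_unit; auto; lra.
      * intros a Ha. apply parseval; auto.
    + intros a Ha. unfold ws. rewrite vnorm2_scal, Hss. reflexivity.
  - intros l Hl. unfold gram_weight, ws. rewrite <- sumR_scal_l. f_equal. apply sumR_ext; intros a Ha.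
    rewrite ip_scal_r, Cnorm2_mul, Hss. reflexivity.
Qed.

Lemma entropy_domination n K A (f w : nat -> nat -> Cpx) g lam : 0 < g ->
  (forall a b, (a < A)%nat -> (b < A)%nat -> a <> b -> ip n (w a) (w b) = C0) ->
  sumR A (fun a => vnorm2 n (w a)) = g ->
  sumR K (fun k => vnorm2 n (f k)) = 1 ->
  (forall e, gram_weight n A w e <= lam * gram_weight n K f e) ->
  sumR K (fun k => xlnx (vnorm2 n (f k))) <= g / lam * sumR A (fun a => xlnx (vnorm2 n (w a) / g)).
Proof.
  intros Hg Hw Sw Sf Hdom.
  destruct (spectral n (gram K f) (hermitian_gram K f n)) as [E [y [HEu [HEc HY]]]].
  set (c := fun l => gram_weight n A w (col E l)).
  assert (Hy : forall l, (l < n)%nat -> y l = gram_weight n K f (col E l))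
    by (intros; apply eigenvalue_gram_weight; auto).
  assert (Sy : sumR n y = 1).
  { rewrite (sumR_ext n _ _ Hy), gram_weight_basis_sum; auto. }
  assert (Sc : sumR n c = g) by (unfold c; rewrite gram_weight_basis_sum; auto).
  eapply Rle_trans; [apply (ensemble_xlnx_le_spectrum n K f E y); auto|].
  eapply Rle_trans.
  - apply (xlnx_dominated n c y g lam); auto.
    + intros; apply gram_weight_nonneg.
    + intros l Hl. rewrite Hy by auto. apply Hdom.
  - assert (Hlam : 0 < lam).
    { assert (g <= lam * 1); [|lra]. rewrite <- Sy, <- Sc, <- sumR_scal_l.
      apply sumR_le; intros l Hl. rewrite Hy by auto. apply Hdom. }
    apply Rmult_le_compat_l; [apply Rmult_le_pos; [lra| left; apply Rinv_0_lt_compat; lra]|].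
    pose proof (basis_xlnx_le_orthogonal n A w E (/ g) ltac:(apply Rinv_0_lt_compat; lra) HEu HEc Hw).
    unfold c, Rdiv. rewrite (sumR_ext n _ (fun l => xlnx (/ g * gram_weight n A w (col E l))))
      by (intros; rewrite Rmult_comm; auto).
    rewrite (sumR_ext A _ (fun a => xlnx (/ g * vnorm2 n (w a)))) by (intros; rewrite Rmult_comm; auto).
    auto.
Qed.

(** * The ensemble of a mixture *)

Definition mixture t K (f1 f2 : nat -> nat -> Cpx) := fun k j =>
  if Nat.ltb k K then Cmul (RtoC (sqrt t)) (f1 k j) else Cmul (RtoC (sqrt (1 - t))) (f2 (k - K)%nat j).

Lemma sumR_mixture t K f1 f2 (F : (nat -> Cpx) -> R) :
  sumR (K + K) (fun k => F (mixture t K f1 f2 k))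
  = sumR K (fun k => F (fun j => Cmul (RtoC (sqrt t)) (f1 k j)))
    + sumR K (fun k => F (fun j => Cmul (RtoC (sqrt (1 - t))) (f2 k j))).
Proof.
  rewrite sumR_plus. f_equal; apply sumR_ext; intros k Hk; unfold mixture.
  - destruct (Nat.ltb_spec k K); [auto|lia].
  - destruct (Nat.ltb_spec (K + k) K); [lia|]. replace (K + k - K)%nat with k by lia. auto.
Qed.

Lemma mixture_gram_weight n t K f1 f2 e : 0 < t < 1 ->
  gram_weight n (K + K) (mixture t K f1 f2) e = t * gram_weight n K f1 e + (1 - t) * gram_weight n K f2 e.
Proof.
  intros Ht. unfold gram_weight. rewrite (sumR_mixture t K f1 f2 (fun x => Cnorm2 (ip n e x))).
  rewrite <- !sumR_scal_l. f_equal; apply sumR_ext; intros k Hk;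
    rewrite ip_scal_r, Cnorm2_mul, Cnorm2_RtoC, sqrt_sqrt by lra; reflexivity.
Qed.

Lemma mixture_weights n t K f1 f2 p q : 0 < t < 1 ->
  (forall k, (k < K)%nat -> vnorm2 n (f1 k) = p k) -> (forall k, (k < K)%nat -> vnorm2 n (f2 k) = q k) ->
  (forall k, (k < K)%nat -> 0 <= p k) -> (forall k, (k < K)%nat -> 0 <= q k) ->
  sumR K p = 1 -> sumR K q = 1 ->
  sumR (K + K) (fun k => vnorm2 n (mixture t K f1 f2 k)) = 1 /\
  sumR (K + K) (fun k => xlnx (vnorm2 n (mixture t K f1 f2 k)))
  = xlnx t + xlnx (1 - t) + t * sumR K (fun k => xlnx (p k)) + (1 - t) * sumR K (fun k => xlnx (q k)).
Proof.
  intros Ht H1 H2 Hp Hq Sp Sq.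
  assert (N1 : forall k, (k < K)%nat -> vnorm2 n (fun j => Cmul (RtoC (sqrt t)) (f1 k j)) = t * p k).
  { intros k Hk. rewrite vnorm2_scal, Cnorm2_RtoC, sqrt_sqrt, H1 by (auto; lra). auto. }
  assert (N2 : forall k, (k < K)%nat -> vnorm2 n (fun j => Cmul (RtoC (sqrt (1 - t))) (f2 k j)) = (1 - t) * q k).
  { intros k Hk. rewrite vnorm2_scal, Cnorm2_RtoC, sqrt_sqrt, H2 by (auto; lra). auto. }
  split.
  - rewrite (sumR_mixture t K f1 f2 (vnorm2 n)).
    rewrite (sumR_ext K _ (fun k => t * p k) N1), (sumR_ext K _ (fun k => (1 - t) * q k) N2).
    rewrite !sumR_scal_l, Sp, Sq. ring.
  - rewrite (sumR_mixture t K f1 f2 (fun x => xlnx (vnorm2 n x))).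
    rewrite (sumR_ext K _ (fun k => p k * xlnx t + t * xlnx (p k)))
      by (intros; rewrite N1 by auto; apply xlnx_mul; auto; lra).
    rewrite (sumR_ext K (fun k => xlnx (vnorm2 n (fun j => Cmul (RtoC (sqrt (1 - t))) (f2 k j))))
                       (fun k => q k * xlnx (1 - t) + (1 - t) * xlnx (q k)))
      by (intros; rewrite N2 by auto; apply xlnx_mul; auto; lra).
    rewrite !sumR_add, !sumR_scal_r, !sumR_scal_l, Sp, Sq. ring.
Qed.

(** * The operator inequality for a superposition *)

(* |αa + βb|² <= (|α|²/t + |β|²/(1-t)) (t|a|² + (1-t)|b|²); the gap is |(1-t) α b̄ - t β ā|² / (t(1-t)). *)
Lemma cauchy_schwarz_mix alpha beta a b t : 0 < t < 1 ->
  Cnorm2 (Cadd (Cmul alpha a) (Cmul beta b))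
  <= (Cnorm2 alpha / t + Cnorm2 beta / (1 - t)) * (t * Cnorm2 a + (1 - t) * Cnorm2 b).
Proof.
  intros Ht.
  set (P := Cmul (RtoC (1 - t)) (Cmul alpha (Cconj b))).
  set (Q := Cmul (RtoC t) (Cmul beta (Cconj a))).
  assert (E : t * (1 - t) * ((Cnorm2 alpha / t + Cnorm2 beta / (1 - t)) * (t * Cnorm2 a + (1 - t) * Cnorm2 b)
             - Cnorm2 (Cadd (Cmul alpha a) (Cmul beta b))) = Cnorm2 (Csub P Q)).
  { unfold P, Q, Cnorm2; simpl. field. lra. }
  pose proof (Cnorm2_nonneg (Csub P Q)).
  assert (0 < t * (1 - t)) by nra.
  set (X := (Cnorm2 alpha / t + Cnorm2 beta / (1 - t)) * (t * Cnorm2 a + (1 - t) * Cnorm2 b)) in *.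
  set (Z := Cnorm2 (Cadd (Cmul alpha a) (Cmul beta b))) in *.
  clearbody X Z P Q. nra.
Qed.

Lemma superpos_domination dA dB alpha beta Psi Phi t e : 0 < t < 1 ->
  gram_weight dB dA (conj_rows (superpos alpha beta Psi Phi)) e
  <= (Cnorm2 alpha / t + Cnorm2 beta / (1 - t))
     * (t * gram_weight dB dA (conj_rows Psi) e + (1 - t) * gram_weight dB dA (conj_rows Phi) e).
Proof.
  intros Ht. unfold gram_weight.
  rewrite Rmult_plus_distr_l, <- !Rmult_assoc, <- !sumR_scal_l, <- sumR_add.
  apply sumR_le; intros i Hi.
  assert (Hrow : ip dB e (conj_rows (superpos alpha beta Psi Phi) i)
                 = Cadd (Cmul (Cconj alpha) (ip dB e (conj_rows Psi i)))
                        (Cmul (Cconj beta) (ip dB e (conj_rows Phi i)))).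
  { rewrite <- !ip_scal_r, <- ip_add_r. apply ip_ext; auto. intros j Hj.
    unfold conj_rows, superpos. rewrite Cconj_add, !Cconj_mul. reflexivity. }
  rewrite Hrow. eapply Rle_trans; [apply (cauchy_schwarz_mix _ _ _ _ t Ht)|].
  rewrite !Cnorm2_conj. right; ring.
Qed.

Lemma norm2_pos dA dB (v : bivec) :
  (exists i j, (i < dA)%nat /\ (j < dB)%nat /\ v i j <> C0) -> 0 < norm2 dA dB v.
Proof.
  intros [i [j [Hi [Hj Hne]]]]. unfold norm2.
  eapply Rlt_le_trans; [|apply (sumR_term_le dA _ i); auto].
  - eapply Rlt_le_trans; [apply (Cnorm2_pos _ Hne)|].
    apply (sumR_term_le dB (fun j => Cnorm2 (v i j))); auto. intros; apply Cnorm2_nonneg.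
  - intros; apply sumR_nonneg; intros; apply Cnorm2_nonneg.
Qed.

Lemma prefactor_eq alpha beta t : 0 < t < 1 -> Cnorm2 alpha + Cnorm2 beta = 1 ->
  (t * Cnorm2 beta + (1 - t) * Cnorm2 alpha) / (t * (1 - t)) = Cnorm2 alpha / t + Cnorm2 beta / (1 - t)
  /\ 0 < Cnorm2 alpha / t + Cnorm2 beta / (1 - t).
Proof.
  intros Ht Hab. split; [field; lra|].
  pose proof (Cnorm2_nonneg alpha). pose proof (Cnorm2_nonneg beta).
  apply (Rmult_lt_reg_l (t * (1 - t))); [nra|]. rewrite Rmult_0_r.
  replace (t * (1 - t) * (Cnorm2 alpha / t + Cnorm2 beta / (1 - t)))
    with ((1 - t) * Cnorm2 alpha + t * Cnorm2 beta) by (field; lra). nra.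
Qed.

Lemma entropy_bound_bits g lam t R P Q : 0 < g -> 0 < lam ->
  xlnx t + xlnx (1 - t) + t * P + (1 - t) * Q <= g / lam * R ->
  g * (- R / ln 2) <= lam * (t * (- P / ln 2) + (1 - t) * (- Q / ln 2) + h2 t).
Proof.
  intros Hg Hlam H. unfold h2. rewrite !xlog2x_xlnx.
  assert (Hl2 : 0 < ln 2) by (pose proof ln_lt_2; lra).
  apply (Rmult_le_compat_l lam) in H; [|lra].
  replace (lam * (g / lam * R)) with (g * R) in H by (field; lra).
  apply (Rmult_le_reg_r (ln 2)); auto.
  replace (g * (- R / ln 2) * ln 2) with (- (g * R)) by (field; lra).
  replace (lam * (t * (- P / ln 2) + (1 - t) * (- Q / ln 2) + (- (xlnx t / ln 2) - xlnx (1 - t) / ln 2)) * ln 2)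
    with (- (lam * (xlnx t + xlnx (1 - t) + t * P + (1 - t) * Q))) by (field; lra).
  lra.
Qed.

Theorem theorem3 (dA dB : nat) (Psi Phi : bivec) (alpha beta : Cpx)
  (hPsi : norm2 dA dB Psi = 1) (hPhi : norm2 dA dB Phi = 1)
  (hab : Cnorm2 alpha + Cnorm2 beta = 1)
  (hGamma : exists i j, (i < dA)%nat /\ (j < dB)%nat /\
              superpos alpha beta Psi Phi i j <> C0)
  (t : R) (ht : 0 < t < 1) :
  norm2 dA dB (superpos alpha beta Psi Phi)
    * entanglement dA dB (superpos alpha beta Psi Phi)
  <= (t * Cnorm2 beta + (1 - t) * Cnorm2 alpha) / (t * (1 - t))
     * (t * entanglement dA dB Psi + (1 - t) * entanglement dA dB Phi + h2 t).
Proof.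
  set (G := superpos alpha beta Psi Phi). set (g := norm2 dA dB G).
  set (lam := Cnorm2 alpha / t + Cnorm2 beta / (1 - t)).
  destruct (prefactor_eq alpha beta t ht hab) as [-> Hlam]. fold lam in Hlam |- *.
  assert (Hg : 0 < g) by (apply norm2_pos; auto).
  (* step (2): Schmidt families of Γ, Ψ, Φ *)
  destruct (schmidt_decomposition dA dB G Hg) as [Sr [_ [w [Hw [Hwn Hwg]]]]].
  destruct (schmidt_decomposition dA dB Psi ltac:(lra)) as [Sp [Np [wp [_ [Hpn Hpg]]]]].
  destruct (schmidt_decomposition dA dB Phi ltac:(lra)) as [Sq [Nq [wq [_ [Hqn Hqg]]]]].
  rewrite hPsi in Hpn. rewrite hPhi in Hqn.
  set (r := spectrum dA (rhoA dA dB G)) in *.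
  set (p := spectrum dA (rhoA dA dB Psi)) in *. set (q := spectrum dA (rhoA dA dB Phi)) in *.
  (* step (3): the ensemble of the mixture t Ψ + (1-t) Φ *)
  destruct (mixture_weights dB t dA wp wq p q ht) as [Sf Hf];
    [intros; rewrite Hpn by auto; ring | intros; rewrite Hqn by auto; ring | auto..].
  (* step (4) applied to the Schmidt family of Γ, dominated by step (1) *)
  assert (Sw : sumR dA (fun a => vnorm2 dB (w a)) = g).
  { rewrite (sumR_ext dA _ _ Hwn), sumR_scal_l, Sr. fold g; ring. }
  assert (Hdom : forall e, gram_weight dB dA w e <= lam * gram_weight dB (dA + dA) (mixture t dA wp wq) e).
  { intros e. rewrite Hwg, mixture_gram_weight, Hpg, Hqg by auto. apply superpos_domination; auto. }
  pose proof (entropy_domination dB (dA + dA) dA _ w g lam Hg Hw Sw Sf Hdom) as Hent.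
  rewrite Hf, (sumR_ext dA (fun a => xlnx (vnorm2 dB (w a) / g)) (fun a => xlnx (r a))) in Hent
    by (intros; rewrite Hwn by auto; fold g; f_equal; field; lra).
  rewrite !entanglement_spectrum. fold r p q. apply entropy_bound_bits; auto.
Qed.
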